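(* Let $T$ be the rank-one cutting and stacking transformation with $C_0=I=(0,1)$, $r_n=n+2$, $h_n=5^{n(n+1)/2}$ for all $n\ge0$, and spacers chosen so that for each $n$ $$H_n=\{0\}\cup\{j\cdot5^{n(n+1)/2}:1\le j\le\lceil\sqrt n\rceil\}\cup\{5^{n(n+1)/2+i}:\lceil\sqrt n\rceil\le i\le n\}.$$ Then $T$ is of zero type: $\mu(A\cap T^kA)\to0$ as $k\to\infty$ for every measurable $A$ of finite measure.
   Context: Cutting and stacking: $C_0$ is a single level $I$; column $C_n$ of height $h_n$ is cut into $r_n$ equal-width subcolumns, $s_{n,k}\ge0$ spacers are placed above the $k$-th subcolumn ($0\le k\le r_n-1$), and subcolumns are stacked left to right to form $C_{n+1}$; $T$ maps each level to the one above. With $h_{n,k}=h_n+s_{n,k}$, $H_n=\{0\}\cup\{\sum_{k=0}^{i}h_{n,k}:0\le i<r_n-1\}$; so the prescriptions above determine $s_{n,k}$ for $k<r_n-1$, and $s_{n,r_n-1}$ is determined by $h_{n+1}=\sum_{k}h_{n,k}=5^{(n+1)(n+2)/2}$ (in particular $s_{n,r_n-1}>0$). $\mu$ is Lebesgue measure on the resulting space (infinite measure). *)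

From Stdlib Require Import Reals Rtopology Lra Lia Arith List ClassicalEpsilon.
Import ListNotations.
Open Scope R_scope.

Definition outer_le (A : R -> Prop) (m : R) : Prop :=
  forall eps : R, 0 < eps ->
    exists a b : nat -> R,
      (forall n, a n <= b n) /\
      (forall x, A x -> exists n, a n < x < b n) /\
      (forall N, sum_f_R0 (fun n => b n - a n) N <= m + eps).

Definition lebesgue_measurable (A : R -> Prop) : Prop :=
  forall eps : R, 0 < eps ->
    exists G : R -> Prop, open_set G /\ (forall x, A x -> G x) /\
      outer_le (fun x => G x /\ ~ A x) eps.

Definition finite_measure (A : R -> Prop) : Prop := exists M : R, outer_le A M.

(** * Rank-one cutting and stacking, realized on X = [0, +oo) *)

Section CS.
Variables (r : nat -> nat) (s : nat -> nat -> nat).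

Fixpoint width (n : nat) : R :=
  match n with O => 1 | S m => width m / INR (r m) end.

Definition spacers_before (n k : nat) : nat := list_sum (map (s n) (seq 0 k)).

(** [col n] = list of the left endpoints of the levels of C_n, bottom to top;
    level i of C_n is the interval [nth i (col n) 0, nth i (col n) 0 + width n).
    C_0 = [0,1).  C_n occupies [0, |C_n| * width n); the spacers added at stage n
    are consecutive fresh intervals of width (width (S n)) placed to the right of it. *)
Fixpoint col (n : nat) : list R :=
  match n with
  | O => [0]
  | S m =>
      let c := col m in
      flat_map (fun k =>
          map (fun a => a + INR k * width (S m)) c
       ++ map (fun t => INR (length c) * width m
                        + INR (spacers_before m k + t) * width (S m))
              (seq 0 (s m k)))
        (seq 0 (r m))
  end.

Definition level_start (n i : nat) : R := nth i (col n) 0.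

Definition T_rel (x y : R) : Prop :=
  exists n i, (S i < length (col n))%nat /\
    level_start n i <= x < level_start n i + width n /\
    y = x - level_start n i + level_start n (S i).

Definition T (x : R) : R := epsilon (inhabits 0) (fun y => T_rel x y).

Definition zero_type : Prop :=
  forall A : R -> Prop,
    (forall x, A x -> 0 <= x) ->
    lebesgue_measurable A -> finite_measure A ->
    forall eps : R, 0 < eps ->
      exists K : nat, forall k : nat, (K <= k)%nat ->
        outer_le (fun y => A y /\ exists x, A x /\ Nat.iter k T x = y) eps.

End CS.

Definition e_exp (n : nat) : nat := (n * (n + 1) / 2)%nat.
Definition hgt (n : nat) : nat := (5 ^ e_exp n)%nat.
Definition rN (n : nat) : nat := (n + 2)%nat.

Definition H_set (n m : nat) : Prop :=
  m = 0%nat \/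
  (exists j, (1 <= j <= Nat.sqrt_up n)%nat /\ m = (j * hgt n)%nat) \/
  (exists i, (Nat.sqrt_up n <= i <= n)%nat /\ m = (5 ^ (e_exp n + i))%nat).

Definition H_of (r : nat -> nat) (s : nat -> nat -> nat) (h : nat -> nat) (n m : nat) : Prop :=
  m = 0%nat \/
  exists i, (i < r n - 1)%nat /\ m = list_sum (map (fun k => h n + s n k)%nat (seq 0 (S i))).

(** Level [c] of the column [C_n] is the interval of width [w_n]
    starting at [slot n c * w_n], where [slot n] is a permutation of [{0, .., h_n - 1}]
    given by a recursion parallel to [col] ([col_slots]).  Inside [C_{m+d}], the levels
    lying in [[0, L_m)] ([L_m = h_m w_m] is the length of [C_m]) come in [copies m d] copies of
    [C_m]: level [g + j] of [C_{m+d}] is a sublevel of level [j] of [C_m], for [g] in the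
    list of copy offsets; all other levels lie beyond [L_m] ([copy_position_spec],
    [deep_level_cases]).  Since [T] moves each level to the next one, [T^k] restricted
    to level [j - k] of [C_N] is a translation.

    Fix [A] of finite outer measure, [eps > 0], a level [n0] such that
    the tail [A ∩ [L_{n0}, ∞)] is small, and a large depth [N = n0 + d].  A point
    [y = T^k x] of [A ∩ T^k A] either lies in the tail, or in one of the [k] bottom levels of
    [C_N], or is a piecewise translate of a point of the tail, or both [x] and [y] lie in
    copies of [C_{n0}] whose offsets differ by about [k] ([return_cover]).  The first three
    sets are small by the outer-measure toolkit; the last one is small because the
    prescribed sets [H_n] are so lacunary that, uniformly in the depth, only a small
    proportion of the pairs of offsets are at a given large distance
    ([difference_density_small]).  The arithmetic core is [gap_count_bound]: a positive gap
    occurs between at most [⌈√n⌉ + 2] pairs of elements of [H_n]. *)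

From Stdlib Require Import Reals List Arith Lia Lra ZArith ClassicalEpsilon.
Import ListNotations.

Open Scope nat_scope.

(** [psum f k = f 0 + ... + f (k-1)]; partial sums of the heights [h_n + s_{n,k}] give the
    positions of the subcolumns inside [C_{n+1}]. *)
Definition psum (f : nat -> nat) (k : nat) : nat := list_sum (map f (seq 0 k)).

Lemma psum_S f k : psum f (S k) = psum f k + f k.
Proof. unfold psum. rewrite seq_S, map_app, list_sum_app. simpl. lia. Qed.

Lemma psum_mono f a b : a <= b -> psum f a <= psum f b.
Proof. induction 1; auto. rewrite psum_S. lia. Qed.

Lemma psum_lt_le f k r : k < r -> psum f k + f k <= psum f r.
Proof. intros H. rewrite <- psum_S. apply psum_mono. lia. Qed.

Lemma psum_plus f g k : psum (fun x => f x + g x) k = psum f k + psum g k.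
Proof. induction k. reflexivity. rewrite !psum_S. lia. Qed.

Lemma psum_const c k : psum (fun _ => c) k = k * c.
Proof. induction k. reflexivity. rewrite psum_S. lia. Qed.

Lemma psum_decomp f r c : c < psum f r ->
  exists k, k < r /\ psum f k <= c < psum f k + f k.
Proof.
  induction r; intros H. { unfold psum in H; simpl in H; lia. }
  rewrite psum_S in H.
  destruct (Nat.lt_ge_cases c (psum f r)) as [H1|H1].
  - destruct (IHr H1) as [k [Hk Hk2]]. exists k. split; [lia|auto].
  - exists r. split; lia.
Qed.

Lemma psum_block_inj f k1 k2 u1 u2 :
  u1 < f k1 -> u2 < f k2 -> psum f k1 + u1 = psum f k2 + u2 -> k1 = k2.
Proof.
  intros H1 H2 E.
  destruct (Nat.lt_trichotomy k1 k2) as [L|[L|L]]; auto.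
  - pose proof (psum_lt_le f k1 k2 L). lia.
  - pose proof (psum_lt_le f k2 k1 L). lia.
Qed.

Lemma lsum_plus {A} (f g : A -> nat) l :
  list_sum (map (fun x => f x + g x) l) = list_sum (map f l) + list_sum (map g l).
Proof. induction l; simpl; lia. Qed.

Lemma lsum_le {A} (f g : A -> nat) l :
  (forall x, In x l -> f x <= g x) -> list_sum (map f l) <= list_sum (map g l).
Proof.
  induction l as [|a l IH]; simpl; intros H. { lia. }
  assert (f a <= g a) by auto. assert (list_sum (map f l) <= list_sum (map g l)) by auto. lia.
Qed.

Lemma lsum_ext {A} (f g : A -> nat) l :
  (forall x, In x l -> f x = g x) -> list_sum (map f l) = list_sum (map g l).
Proof. induction l; simpl; intros H. { lia. } rewrite H by auto. rewrite IHl; auto. Qed.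

Lemma lsum_mul_r {A} (f : A -> nat) c l :
  list_sum (map (fun x => f x * c) l) = list_sum (map f l) * c.
Proof. induction l; simpl; lia. Qed.

Lemma lsum_const {A} c (l : list A) : list_sum (map (fun _ => c) l) = length l * c.
Proof. induction l; simpl; lia. Qed.

Lemma lsum_app {A} (f : A -> nat) l1 l2 :
  list_sum (map f (l1 ++ l2)) = list_sum (map f l1) + list_sum (map f l2).
Proof. rewrite map_app, list_sum_app. auto. Qed.

Lemma lsum_swap {A B} (f : A -> B -> nat) l1 l2 :
  list_sum (map (fun x => list_sum (map (fun y => f x y) l2)) l1) =
  list_sum (map (fun y => list_sum (map (fun x => f x y) l1)) l2).
Proof.
  induction l1; simpl. { induction l2; simpl; lia. }
  rewrite IHl1, <- lsum_plus. reflexivity.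
Qed.

Lemma lsum_flat_map {A B} (f : B -> nat) (F : A -> list B) l :
  list_sum (map f (flat_map F l)) = list_sum (map (fun x => list_sum (map f (F x))) l).
Proof. induction l; simpl. { auto. } rewrite map_app, list_sum_app, IHl. auto. Qed.

Lemma lsum_le_one {A} (f : A -> nat) l :
  (forall x, In x l -> f x <= 1) ->
  (forall x y, In x l -> In y l -> f x <> 0 -> f y <> 0 -> x = y) -> NoDup l ->
  list_sum (map f l) <= 1.
Proof.
  induction l as [|a l IH]; simpl; intros H1 H2 ND. { lia. }
  inversion ND; subst.
  destruct (Nat.eq_dec (f a) 0).
  - assert (list_sum (map f l) <= 1) by (apply IH; auto). lia.
  - assert (list_sum (map f l) = 0).
    { assert (forall x, In x l -> f x = 0).
      { intros x Hx. destruct (Nat.eq_dec (f x) 0); auto.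
        exfalso. assert (x = a) by (apply H2; auto). subst; auto. }
      rewrite (lsum_ext f (fun _ => 0)) by auto. rewrite lsum_const. lia. }
    specialize (H1 a (or_introl eq_refl)). lia.
Qed.

Lemma lsum_indicator k r : k < r ->
  list_sum (map (fun k' => if k' =? k then 1 else 0) (seq 0 r)) = 1.
Proof.
  intros H. apply Nat.le_antisymm.
  - apply lsum_le_one. { intros; destruct (_ =? _); lia. }
    + intros x y _ _ Hx Hy.
      destruct (Nat.eqb_spec x k); destruct (Nat.eqb_spec y k); lia.
    + apply seq_NoDup.
  - replace (seq 0 r) with (seq 0 k ++ [k] ++ seq (S k) (r - S k)).
    + rewrite !lsum_app. simpl. rewrite Nat.eqb_refl. lia.
    + transitivity (seq 0 (k + S (r - S k))). { rewrite seq_app. reflexivity. }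
      f_equal. lia.
Qed.

Lemma lsum_nonzero {A} (f : A -> nat) l :
  list_sum (map f l) <> 0 -> exists x, In x l /\ f x <> 0.
Proof.
  induction l as [|a l IH]; simpl; intros H. { lia. }
  destruct (Nat.eq_dec (f a) 0). { destruct IH as [x [Hx Hx2]]; [lia|eauto]. } eauto.
Qed.

Lemma length_flat_map_seq {A} (B : nat -> list A) r :
  length (flat_map B (seq 0 r)) = psum (fun k => length (B k)) r.
Proof. rewrite length_flat_map. reflexivity. Qed.

Lemma nth_flat_map_seq {A} (B : nat -> list A) (d : A) r k j :
  k < r -> j < length (B k) ->
  nth (psum (fun k => length (B k)) k + j) (flat_map B (seq 0 r)) d = nth j (B k) d.
Proof.
  induction r; intros Hk Hj. { lia. }
  rewrite seq_S, flat_map_app. simpl. rewrite app_nil_r.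
  destruct (Nat.eq_dec k r) as [->|Hne].
  - rewrite app_nth2; rewrite length_flat_map_seq; [|lia].
    f_equal. lia.
  - rewrite app_nth1. { apply IHr; lia. }
    rewrite length_flat_map_seq.
    pose proof (psum_lt_le (fun k => length (B k)) k r). lia.
Qed.

Lemma NoDup_flat_map_seq {A} (B : nat -> list A) r :
  (forall k, k < r -> NoDup (B k)) ->
  (forall k1 k2 x, k1 < k2 -> k2 < r -> In x (B k1) -> In x (B k2) -> False) ->
  NoDup (flat_map B (seq 0 r)).
Proof.
  induction r; intros H1 H2. { constructor. }
  rewrite seq_S, flat_map_app. simpl. rewrite app_nil_r.
  apply NoDup_app.
  - apply IHr. { intros; apply H1; lia. }
    intros k1 k2 x Q1 Q2 Q3 Q4; eapply (H2 k1 k2 x); eauto; lia.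
  - apply H1; lia.
  - intros x Hx Hx2. apply in_flat_map in Hx. destruct Hx as [k [Hk Hk2]]. apply in_seq in Hk.
    eapply (H2 k r x); eauto; lia.
Qed.

Lemma nth_map' {A B} (f : A -> B) l d d' n :
  n < length l -> nth n (map f l) d = f (nth n l d').
Proof.
  intros H. rewrite nth_indep with (d' := f d') by (rewrite length_map; auto). apply map_nth.
Qed.

Lemma map_flat_map' {A B C} (f : B -> C) (g : A -> list B) l :
  map f (flat_map g l) = flat_map (fun x => map f (g x)) l.
Proof. induction l; simpl; auto. rewrite map_app, IHl. auto. Qed.

Lemma mul_add_inj q1 q2 k1 k2 r :
  k1 < r -> k2 < r -> q1 * r + k1 = q2 * r + k2 -> q1 = q2 /\ k1 = k2.
Proof.
  intros H1 H2 E.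
  destruct (Nat.lt_trichotomy q1 q2) as [L|[L|L]].
  - assert (q1 * r + r <= q2 * r) by nia. lia.
  - subst. lia.
  - assert (q2 * r + r <= q1 * r) by nia. lia.
Qed.

(** ** Arithmetic of the parameters [r_n = n + 2], [h_n = 5^(n(n+1)/2)] *)

Lemma e_exp_S n : e_exp (S n) = e_exp n + S n.
Proof.
  unfold e_exp. replace (S n * (S n + 1)) with (n * (n + 1) + S n * 2) by lia.
  rewrite Nat.div_add by lia. reflexivity.
Qed.

Lemma hgt_S5 n : hgt (S n) = hgt n * 5 ^ S n.
Proof. unfold hgt. rewrite e_exp_S, Nat.pow_add_r. reflexivity. Qed.

Lemma hgt_pos m : 0 < hgt m.
Proof. unfold hgt. apply Nat.neq_0_lt_0, Nat.pow_nonzero. lia. Qed.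

Lemma hgt_mono a b : a <= b -> hgt a <= hgt b.
Proof. induction 1. { lia. } rewrite hgt_S5. pose proof (Nat.pow_nonzero 5 (S m)). nia. Qed.

Lemma rN_pos m : 0 < rN m.
Proof. unfold rN. lia. Qed.

Lemma pow5_lt n : n < 5 ^ n.
Proof. induction n. { simpl; lia. } rewrite Nat.pow_succ_r'. lia. Qed.

Lemma pow5_ge m : 2 * (m + 2) <= 5 ^ S m.
Proof. induction m. { simpl. lia. } rewrite Nat.pow_succ_r'. lia. Qed.

(** [H_n = { h_n * psi n k : k <= n + 1 }] with [psi n k = k] up to [⌈√n⌉] and
    [5^(k-1)] beyond. *)
Definition psi (j k : nat) : nat := if k <=? Nat.sqrt_up j then k else 5 ^ (k - 1).

Lemma sqrt_up_le j : Nat.sqrt_up j <= j.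
Proof. apply Nat.sqrt_up_le_lin. lia. Qed.

Lemma strict_mono (f : nat -> nat) n : (forall k, k < n -> f k < f (S k)) ->
  forall a b, a < b -> b <= n -> f a < f b.
Proof.
  intros H a b Hab. induction Hab; intros Hb. { apply H; lia. }
  assert (f a < f m) by (apply IHHab; lia). specialize (H m ltac:(lia)). lia.
Qed.

Lemma strict_mono_same_range (f g : nat -> nat) n :
  (forall a b, a < b -> b <= n -> f a < f b) -> (forall a b, a < b -> b <= n -> g a < g b) ->
  (forall k, k <= n -> exists k', k' <= n /\ f k = g k') ->
  (forall k, k <= n -> exists k', k' <= n /\ g k = f k') ->
  forall k, k <= n -> f k = g k.
Proof.
  intros Hf Hg Hfg Hgf k. induction k as [k IH] using lt_wf_ind. intros Hk.
  destruct (Hfg k Hk) as [k1 [Hk1 E1]]. destruct (Hgf k Hk) as [k2 [Hk2 E2]].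
  destruct (Nat.lt_trichotomy k1 k) as [L|[L|L]].
  - rewrite <- IH in E1 by lia. pose proof (Hf k1 k L Hk). lia.
  - subst; auto.
  - destruct (Nat.lt_trichotomy k2 k) as [L2|[L2|L2]].
    + rewrite (IH k2 L2 ltac:(lia)) in E2. pose proof (Hg k2 k L2 Hk). lia.
    + subst. pose proof (Hg k k1 L Hk1). lia.
    + pose proof (Hg k k1 L Hk1). pose proof (Hf k k2 L2 Hk2). lia.
Qed.

Lemma psi_lt j a b : a < b -> b <= S j -> psi j a < psi j b.
Proof.
  intros Hab Hb. apply (strict_mono (psi j) (S j)); auto. intros k Hk.
  unfold psi. pose proof (sqrt_up_le j).
  destruct (Nat.leb_spec k (Nat.sqrt_up j)); destruct (Nat.leb_spec (S k) (Nat.sqrt_up j)); try lia.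
  - assert (k = Nat.sqrt_up j) by lia. subst. simpl. rewrite Nat.sub_0_r.
    pose proof (pow5_lt (Nat.sqrt_up j)). lia.
  - replace (S k - 1) with (S (k - 1)) by lia. rewrite Nat.pow_succ_r'.
    pose proof (Nat.pow_nonzero 5 (k - 1) ltac:(lia)). lia.
Qed.

Lemma psi_inj j a b : a <= S j -> b <= S j -> psi j a = psi j b -> a = b.
Proof.
  intros Ha Hb E. destruct (Nat.lt_trichotomy a b) as [L|[L|L]]; auto.
  - pose proof (psi_lt j a b L Hb). lia.
  - pose proof (psi_lt j b a L Ha). lia.
Qed.

Lemma psi_le_last j k : k <= S j -> psi j k <= 5 ^ j.
Proof.
  intros H. replace (5 ^ j) with (psi j (S j)).
  - destruct (Nat.eq_dec k (S j)). { subst; lia. } pose proof (psi_lt j k (S j)). lia.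
  - unfold psi. pose proof (sqrt_up_le j).
    destruct (Nat.leb_spec (S j) (Nat.sqrt_up j)). { lia. } f_equal. lia.
Qed.

Lemma H_set_psi j m : H_set j m <-> exists k, k <= S j /\ m = hgt j * psi j k.
Proof.
  unfold psi, H_set. pose proof (sqrt_up_le j). split.
  - intros [->|[[a [[Ha1 Ha2] ->]]|[i [[Hi1 Hi2] ->]]]].
    + exists 0. split. { lia. } simpl. lia.
    + exists a. split. { lia. } destruct (Nat.leb_spec a (Nat.sqrt_up j)); lia.
    + exists (S i). split. { lia. } destruct (Nat.leb_spec (S i) (Nat.sqrt_up j)); try lia.
      unfold hgt. rewrite Nat.pow_add_r. f_equal. f_equal. lia.
  - intros [k [Hk ->]]. destruct (Nat.leb_spec k (Nat.sqrt_up j)).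
    + destruct k. { left. lia. } right. left. exists (S k). split; lia.
    + right. right. exists (k - 1). split. { lia. } unfold hgt. rewrite Nat.pow_add_r. reflexivity.
Qed.

Lemma pow5_diff_inj a a' b b' : a < a' -> b < b' -> 5 ^ a' + 5 ^ b = 5 ^ b' + 5 ^ a -> a = b.
Proof.
  intros Ha Hb E.
  assert (Hmono : forall x y, x <= y -> 5 ^ x <= 5 ^ y) by (intros; apply Nat.pow_le_mono_r; lia).
  destruct (Nat.lt_trichotomy a' b') as [L|[L|L]].
  - exfalso. replace b' with (S (b' - 1)) in E by lia. rewrite Nat.pow_succ_r' in E.
    assert (5 ^ a' <= 5 ^ (b' - 1)) by (apply Hmono; lia).
    assert (5 ^ b <= 5 ^ (b' - 1)) by (apply Hmono; lia).
    pose proof (Nat.pow_nonzero 5 (b' - 1) ltac:(lia)). lia.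
  - subst. assert (5 ^ b = 5 ^ a) as E' by lia. apply Nat.pow_inj_r in E'; lia.
  - exfalso. replace a' with (S (a' - 1)) in E by lia. rewrite Nat.pow_succ_r' in E.
    assert (5 ^ b' <= 5 ^ (a' - 1)) by (apply Hmono; lia).
    assert (5 ^ a <= 5 ^ (a' - 1)) by (apply Hmono; lia).
    pose proof (Nat.pow_nonzero 5 (a' - 1) ltac:(lia)). lia.
Qed.

Definition gap_count (j D : nat) : nat :=
  list_sum (map (fun k => list_sum (map (fun k' => if psi j k' =? psi j k + D then 1 else 0)
    (seq 0 (j + 2)))) (seq 0 (j + 2))).

(** The arithmetic core: a positive gap is realised by at most one pair starting in the
    arithmetic part [k <= ⌈√j⌉] per starting point, and by at most one pair starting in
    the geometric part. *)
Lemma gap_count_bound j D : 1 <= D -> gap_count j D <= Nat.sqrt_up j + 2.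
Proof.
  intros HD. unfold gap_count. set (c := Nat.sqrt_up j). pose proof (sqrt_up_le j).
  set (partners := fun k => list_sum (map (fun k' => if psi j k' =? psi j k + D then 1 else 0)
    (seq 0 (j + 2)))).
  fold partners.
  assert (Hone : forall k, partners k <= 1).
  { intros k. apply lsum_le_one. { intros; destruct (_ =? _); lia. } 2: apply seq_NoDup.
    intros x y Hx Hy E1 E2. apply in_seq in Hx, Hy.
    destruct (Nat.eqb_spec (psi j x) (psi j k + D)); destruct (Nat.eqb_spec (psi j y) (psi j k + D));
      try lia.
    apply (psi_inj j); lia. }
  replace (seq 0 (j + 2)) with (seq 0 (S c) ++ seq (S c) (j + 1 - c)) at 1
    by (rewrite <- seq_app; f_equal; lia).
  rewrite lsum_app.
  assert (Harith : list_sum (map partners (seq 0 (S c))) <= S c).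
  { eapply Nat.le_trans. { apply (lsum_le partners (fun _ => 1)). intros; apply Hone. }
    rewrite lsum_const, length_seq. lia. }
  assert (Hgeom : list_sum (map partners (seq (S c) (j + 1 - c))) <= 1).
  { apply lsum_le_one. { intros; apply Hone. } 2: apply seq_NoDup.
    intros x y Hx Hy Ex Ey. apply in_seq in Hx, Hy.
    destruct (lsum_nonzero _ _ Ex) as [x' [Hx' Ex']].
    destruct (lsum_nonzero _ _ Ey) as [y' [Hy' Ey']]. apply in_seq in Hx', Hy'.
    destruct (Nat.eqb_spec (psi j x') (psi j x + D)) as [Ex2|]; [|lia].
    destruct (Nat.eqb_spec (psi j y') (psi j y + D)) as [Ey2|]; [|lia].
    assert (x < x').
    { destruct (Nat.lt_ge_cases x x'); auto. destruct (Nat.eq_dec x' x). { subst. lia. }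
      pose proof (psi_lt j x' x ltac:(lia) ltac:(lia)). lia. }
    assert (y < y').
    { destruct (Nat.lt_ge_cases y y'); auto. destruct (Nat.eq_dec y' y). { subst. lia. }
      pose proof (psi_lt j y' y ltac:(lia) ltac:(lia)). lia. }
    unfold psi in Ex2, Ey2. fold c in Ex2, Ey2.
    destruct (Nat.leb_spec x c); try lia. destruct (Nat.leb_spec y c); try lia.
    destruct (Nat.leb_spec x' c); try lia. destruct (Nat.leb_spec y' c); try lia.
    assert (x - 1 = y - 1) by (apply (pow5_diff_inj (x - 1) (x' - 1) (y - 1) (y' - 1)); lia).
    lia. }
  lia.
Qed.

Lemma sqrt_ratio (delta : R) : (0 < delta)%R -> exists J1, forall j, J1 <= j ->
  (INR (Nat.sqrt_up j + 2) <= delta * INR (j + 2))%R.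
Proof.
  intros Hd. destruct (INR_archimed delta 4 Hd) as [K0 HK0].
  set (K := S K0). assert (HK : (4 <= INR K * delta)%R) by (unfold K; rewrite S_INR; lra).
  exists (K * K). intros j Hj.
  set (t := Nat.sqrt j). assert (Kt : K <= t) by (apply Nat.sqrt_le_square; lia).
  pose proof (Nat.le_sqrt_up_succ_sqrt j) as Hup. pose proof (Nat.sqrt_spec j ltac:(lia)) as Hsq.
  fold t in Hup, Hsq.
  assert (A : Nat.sqrt_up j + 2 <= 4 * t) by (unfold K in Kt; lia).
  assert (B : K * t <= j + 2) by nia.
  apply le_INR in A, B. rewrite mult_INR in A, B.
  replace (INR 4) with 4%R in A by (simpl; lra).
  pose proof (pos_INR t). nra.
Qed.

Open Scope R_scope.

Fixpoint rsum (f : nat -> R) (n : nat) : R :=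
  match n with O => 0 | S n' => rsum f n' + f n' end.

Lemma sum_f_R0_rsum f N : sum_f_R0 f N = rsum f (S N).
Proof. induction N; simpl. { lra. } rewrite IHN. simpl. lra. Qed.

Lemma rsum_mono f n m : (forall i, 0 <= f i) -> (n <= m)%nat -> rsum f n <= rsum f m.
Proof. intros Hf. induction 1. { lra. } simpl. specialize (Hf m). lra. Qed.

Lemma rsum_nonneg f n : (forall i, 0 <= f i) -> 0 <= rsum f n.
Proof. intros. apply (rsum_mono f 0 n); auto. lia. Qed.

Lemma rsum_add f a b : rsum f (a + b) = rsum f a + rsum (fun i => f (a + i)%nat) b.
Proof.
  induction b; simpl. { rewrite Nat.add_0_r. lra. }
  rewrite Nat.add_succ_r. simpl. rewrite IHb. lra.
Qed.

Lemma rsum_le f g n : (forall i, (i < n)%nat -> f i <= g i) -> rsum f n <= rsum g n.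
Proof.
  induction n; intros H; simpl. { lra. }
  assert (f n <= g n) by (apply H; lia).
  assert (rsum f n <= rsum g n) by (apply IHn; intros; apply H; lia). lra.
Qed.

Lemma rsum_ext f g n : (forall i, (i < n)%nat -> f i = g i) -> rsum f n = rsum g n.
Proof. induction n; intros H; simpl. { lra. } rewrite H by lia. rewrite IHn; auto. Qed.

Lemma rsum_plus f g n : rsum (fun i => f i + g i) n = rsum f n + rsum g n.
Proof. induction n; simpl. { lra. } rewrite IHn. lra. Qed.

Lemma rsum_const c n : rsum (fun _ => c) n = INR n * c.
Proof. induction n; simpl rsum. { simpl; lra. } rewrite IHn, S_INR. lra. Qed.

Lemma rsum_scal c f n : rsum (fun i => c * f i) n = c * rsum f n.
Proof. induction n; simpl. { lra. } rewrite IHn. lra. Qed.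

Lemma rsum_ge_term f n i : (forall i, 0 <= f i) -> (i < n)%nat -> f i <= rsum f n.
Proof.
  intros Hf Hi. pose proof (rsum_mono f (S i) n Hf Hi) as H. simpl in H.
  pose proof (rsum_nonneg f i Hf). lra.
Qed.

Lemma rsum_block h M I :
  rsum h (I * M) = rsum (fun i => rsum (fun r => h (i * M + r)%nat) M) I.
Proof.
  induction I. { reflexivity. }
  replace (S I * M)%nat with (I * M + M)%nat by lia. rewrite rsum_add, IHI. reflexivity.
Qed.

Lemma geom_rsum_le c n : 0 <= c -> rsum (fun i => c * (/2) ^ (S i)) n <= c.
Proof.
  intros Hc.
  assert (Hgeom : forall n, rsum (fun i => (/2) ^ (S i)) n = 1 - (/2) ^ n).
  { induction n0. { simpl. lra. } cbn [rsum]. rewrite IHn0. simpl. lra. }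
  rewrite (rsum_scal c (fun i => (/2) ^ (S i))), Hgeom.
  pose proof (pow_le (/2) n ltac:(lra)). nra.
Qed.

Lemma rsum_at_most_one (t : nat -> R) B n : (forall i, 0 <= t i <= B) ->
  (forall i1 i2, t i1 <> 0 -> t i2 <> 0 -> i1 = i2) -> 0 <= B -> rsum t n <= B.
Proof.
  intros H1 H2 HB. induction n. { simpl. lra. }
  simpl. destruct (Req_dec (t n) 0) as [E|E]. { rewrite E. lra. }
  assert (rsum t n = 0) as E0.
  { transitivity (rsum (fun _ => 0) n). 2: { rewrite rsum_const. lra. }
    apply rsum_ext. intros i Hi. destruct (Req_dec (t i) 0); auto.
    specialize (H2 i n H E). lia. }
  rewrite E0. specialize (H1 n). lra.
Qed.

Lemma INR_lsum_bound {A} (f : A -> nat) l B : (forall x, In x l -> INR (f x) <= B) ->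
  INR (list_sum (map f l)) <= INR (length l) * B.
Proof.
  induction l as [|a l IH]; intros H. { simpl. lra. }
  change (list_sum (map f (a :: l))) with (f a + list_sum (map f l))%nat.
  change (length (a :: l)) with (S (length l)). rewrite plus_INR, S_INR.
  assert (INR (f a) <= B) by (apply H; simpl; auto).
  assert (INR (list_sum (map f l)) <= INR (length l) * B) by (apply IH; intros; apply H; simpl; auto).
  lra.
Qed.

Lemma exists_nat_gt (x : R) : exists n : nat, x < INR n.
Proof. destruct (INR_archimed 1 x) as [n Hn]; [lra|]. exists n. lra. Qed.

Lemma small_factor (C delta : R) : 0 <= C -> 0 < delta -> exists dl, 0 < dl /\ C * dl <= delta.
Proof.
  intros HC Hd. exists (delta / (C + 1)). split. { apply Rdiv_lt_0_compat; lra. }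
  apply Rmult_le_reg_r with (C + 1). { lra. }
  unfold Rdiv. rewrite Rmult_assoc, (Rmult_assoc delta), Rinv_l by lra. nra.
Qed.

(** ** Outer measure toolkit *)

Lemma ol_intro X m :
  (forall eps, 0 < eps -> exists a b : nat -> R, (forall n, a n <= b n) /\
     (forall x, X x -> exists n, a n < x < b n) /\
     (forall n, rsum (fun i => b i - a i) n <= m + eps)) -> outer_le X m.
Proof.
  intros H eps Heps. destruct (H eps Heps) as [a [b [H1 [H2 H3]]]].
  exists a, b. repeat split; auto. intros N. rewrite sum_f_R0_rsum. apply H3.
Qed.

Lemma ol_elim X m eps : outer_le X m -> 0 < eps -> exists a b : nat -> R,
  (forall n, a n <= b n) /\ (forall x, X x -> exists n, a n < x < b n) /\
  (forall n, rsum (fun i => b i - a i) n <= m + eps).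
Proof.
  intros H Heps. destruct (H eps Heps) as [a [b [H1 [H2 H3]]]].
  exists a, b. repeat split; auto. intros n. destruct n.
  - simpl. specialize (H3 0%nat). simpl in H3. specialize (H1 0%nat). lra.
  - rewrite <- sum_f_R0_rsum. apply H3.
Qed.

Lemma ol_nonneg X m : outer_le X m -> 0 <= m.
Proof.
  intros H. destruct (Rle_or_lt 0 m) as [L|L]; auto.
  destruct (ol_elim X m (-m/2) H ltac:(lra)) as [a [b [H1 [H2 H3]]]].
  specialize (H3 1%nat). simpl in H3. specialize (H1 0%nat). lra.
Qed.

Lemma ol_mono X Y m m' : outer_le X m -> (forall y, Y y -> X y) -> m <= m' -> outer_le Y m'.
Proof.
  intros H HY Hm eps Heps. destruct (H eps Heps) as [a [b [H1 [H2 H3]]]].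
  exists a, b. repeat split; auto. intros N. specialize (H3 N). lra.
Qed.

Lemma ol_interval a b : a <= b -> outer_le (fun y => a <= y < b) (b - a).
Proof.
  intros Hab. apply ol_intro. intros eps Heps.
  exists (fun n => if (n =? 0)%nat then a - eps else 0), (fun n => if (n =? 0)%nat then b else 0).
  repeat split.
  - intros [|n]; simpl; lra.
  - intros x Hx. exists 0%nat. simpl. lra.
  - intros n. induction n as [|n IH]; simpl. { lra. }
    destruct n; simpl in *; lra.
Qed.

Lemma ol_empty : outer_le (fun _ => False) 0.
Proof. eapply ol_mono. { apply (ol_interval 0 0). lra. } { tauto. } lra. Qed.

Lemma even_double n : Nat.even (2 * n) = true.
Proof. apply Nat.even_spec. exists n. lia. Qed.

Lemma even_succ_double n : Nat.even (S (2 * n)) = false.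
Proof.
  destruct (Nat.even (S (2 * n))) eqn:E; auto. apply Nat.even_spec in E. destruct E. lia.
Qed.

(** Subadditivity: interleave the two coverings. *)
Lemma ol_union X Y p q : outer_le X p -> outer_le Y q -> outer_le (fun y => X y \/ Y y) (p + q).
Proof.
  intros HX HY. apply ol_intro. intros eps Heps.
  destruct (ol_elim X p (eps/2) HX ltac:(lra)) as [a1 [b1 [A1 [B1 C1]]]].
  destruct (ol_elim Y q (eps/2) HY ltac:(lra)) as [a2 [b2 [A2 [B2 C2]]]].
  set (a := fun n => if Nat.even n then a1 (Nat.div2 n) else a2 (Nat.div2 n)).
  set (b := fun n => if Nat.even n then b1 (Nat.div2 n) else b2 (Nat.div2 n)).
  exists a, b. repeat split.
  - intros n. unfold a, b. destruct (Nat.even n); auto.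
  - intros x [Hx|Hx].
    + destruct (B1 x Hx) as [n Hn]. exists (2 * n)%nat.
      unfold a, b. rewrite even_double, Nat.div2_double. auto.
    + destruct (B2 x Hx) as [n Hn]. exists (S (2 * n))%nat.
      unfold a, b. rewrite even_succ_double, Nat.div2_succ_double. auto.
  - assert (Hpairs : forall N, rsum (fun n => b n - a n) (2 * N) =
                   rsum (fun i => b1 i - a1 i) N + rsum (fun i => b2 i - a2 i) N).
    { induction N. { simpl. lra. }
      replace (2 * S N)%nat with (S (S (2 * N))) by lia. cbn [rsum]. rewrite IHN.
      unfold a, b. rewrite even_succ_double, even_double, Nat.div2_succ_double, Nat.div2_double.
      lra. }
    intros n. apply Rle_trans with (rsum (fun n => b n - a n) (2 * n)).
    + apply rsum_mono. 2: lia. intros i. unfold a, b.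
      destruct (Nat.even i); [specialize (A1 (Nat.div2 i))|specialize (A2 (Nat.div2 i))]; lra.
    + rewrite Hpairs. specialize (C1 n). specialize (C2 n). lra.
Qed.

(** The part of a set of finite outer measure beyond some point has small outer measure:
    a covering of total length [<= M0 + 1] has a tail of length [<= delta]. *)
Lemma ol_tail A M0 delta : outer_le A M0 -> 0 < delta ->
  exists R0, outer_le (fun x => A x /\ R0 <= x) delta.
Proof.
  intros HA Hd. destruct (ol_elim A M0 1 HA ltac:(lra)) as [a [b [H1 [H2 H3]]]].
  set (S := fun n => rsum (fun i => b i - a i) n).
  destruct (completeness (fun y => exists n, y = S n)) as [l [Hl1 Hl2]].
  { exists (M0 + 1). intros y [n ->]. apply H3. }
  { exists (S 0%nat). eauto. }
  assert (HN0 : exists N0, l - delta < S N0).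
  { apply Classical_Prop.NNPP. intros Hc.
    assert (is_upper_bound (fun y => exists n, y = S n) (l - delta)) as Hub.
    { intros y [n ->]. apply Rnot_lt_le. intros Hlt. apply Hc. eauto. }
    specialize (Hl2 _ Hub). lra. }
  destruct HN0 as [N0 HN0].
  exists (rsum (fun i => Rabs (b i)) N0).
  apply ol_intro. intros eps Heps.
  exists (fun n => a (N0 + n)%nat), (fun n => b (N0 + n)%nat). repeat split.
  - intros; auto.
  - intros x [Ax Rx]. destruct (H2 x Ax) as [i Hi].
    destruct (Nat.lt_ge_cases i N0) as [L|L].
    + pose proof (rsum_ge_term (fun i => Rabs (b i)) N0 i ltac:(intros; apply Rabs_pos) L).
      pose proof (Rle_abs (b i)). lra.
    + exists (i - N0)%nat. replace (N0 + (i - N0))%nat with i by lia. auto.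
  - intros n. assert (S (N0 + n)%nat <= l) as Hle by (apply Hl1; eauto).
    unfold S in Hle, HN0. rewrite rsum_add in Hle. lra.
Qed.

(** ** Outer measure of a piecewise translate

    If [E] has outer measure [<= m] and [E] is cut along [M] disjoint slots
    [[q r * w, q r * w + w)], translating each piece by its own amount does not increase
    the outer measure.  Each covering interval of [E] is intersected with each slot; the
    clipped lengths over distinct slots add up to at most the length of the interval. *)

Definition Ls (g : nat -> R) (Q : list nat) : R := fold_right (fun q acc => g q + acc) 0 Q.

Lemma Ls_app g Q1 Q2 : Ls g (Q1 ++ Q2) = Ls g Q1 + Ls g Q2.
Proof. induction Q1; simpl. { lra. } rewrite IHQ1. lra. Qed.

Lemma rsum_Ls (g : nat -> R) (f : nat -> nat) M :
  rsum (fun r => g (f r)) M = Ls g (map f (seq 0 M)).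
Proof.
  induction M. { reflexivity. }
  rewrite seq_S, map_app, Ls_app. simpl rsum. rewrite IHM. simpl. lra.
Qed.

Lemma Ls_subset g Q B : (forall i, 0 <= g i) -> NoDup Q -> (forall q, In q Q -> (q < B)%nat) ->
  Ls g Q <= rsum g B.
Proof.
  intros Hg. revert Q. induction B; intros Q HQ HB.
  - destruct Q as [|q Q]. { simpl; lra. } specialize (HB q (or_introl eq_refl)). lia.
  - destruct (in_dec Nat.eq_dec B Q) as [HIn|HIn].
    + destruct (in_split _ _ HIn) as [Q1 [Q2 ->]].
      destruct (NoDup_remove _ _ _ HQ) as [ND NI].
      assert (Ls g (Q1 ++ Q2) <= rsum g B) as Hrest.
      { apply IHB; auto. intros q Hq. assert (q <> B) by (intro; subst; auto).
        assert (q < S B)%nat by (apply HB, in_or_app; apply in_app_or in Hq; simpl; tauto). lia. }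
      rewrite Ls_app in *. simpl. lra.
    + simpl. assert (Ls g Q <= rsum g B).
      { apply IHB; auto. intros q Hq. assert (q <> B) by (intro; subst; auto).
        specialize (HB q Hq). lia. }
      specialize (Hg B). lra.
Qed.

Definition clip (a b c w : R) : R := Rmax 0 (Rmin b (c + w) - Rmax a c).

Lemma clip_nonneg a b c w : 0 <= clip a b c w.
Proof. unfold clip. apply Rmax_l. Qed.

(** Over consecutive slots the clipped lengths telescope. *)
Lemma clip_sum a b w B : a <= b -> 0 <= w -> rsum (fun q => clip a b (INR q * w) w) B <= b - a.
Proof.
  intros Hab Hw. set (F := fun t => Rmax a (Rmin b t)).
  assert (Htel : forall B, rsum (fun q => clip a b (INR q * w) w) B = F (INR B * w) - F 0).
  { induction B0. { simpl. rewrite Rmult_0_l. lra. }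
    simpl rsum. rewrite IHB0, S_INR.
    replace ((INR B0 + 1) * w) with (INR B0 * w + w) by ring.
    unfold clip, F, Rmax, Rmin. repeat destruct Rle_dec; lra. }
  rewrite Htel. unfold F, Rmax, Rmin. repeat destruct Rle_dec; lra.
Qed.

Lemma clip_sum_injective a b w (q : nat -> nat) M : a <= b -> 0 <= w ->
  (forall r1 r2, (r1 < M)%nat -> (r2 < M)%nat -> q r1 = q r2 -> r1 = r2) ->
  rsum (fun r => clip a b (INR (q r) * w) w) M <= b - a.
Proof.
  intros Hab Hw Hq. rewrite (rsum_Ls (fun q => clip a b (INR q * w) w)).
  eapply Rle_trans. 2: apply (clip_sum a b w (S (psum q M))); auto.
  apply Ls_subset. { intros; apply clip_nonneg. }
  - apply NoDup_map_NoDup_ForallPairs. 2: apply seq_NoDup.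
    intros u v Hu Hv E. apply in_seq in Hu, Hv. apply Hq; auto; lia.
  - intros v Hv. apply in_map_iff in Hv. destruct Hv as [r [<- Hr]]. apply in_seq in Hr.
    pose proof (psum_lt_le q r M ltac:(lia)). lia.
Qed.

Definition clip_hi (b c w : R) : R := Rmin b (c + w).
Definition clip_lo (a b c w eta : R) : R := Rmin (Rmax a c - eta) (clip_hi b c w).

Lemma clipped_interval a b c w eta x : 0 < eta ->
  clip_lo a b c w eta <= clip_hi b c w /\
  clip_hi b c w - clip_lo a b c w eta <= clip a b c w + eta /\
  (a < x < b -> c <= x < c + w -> clip_lo a b c w eta < x < clip_hi b c w).
Proof.
  intros Heta. unfold clip_lo, clip_hi, clip, Rmax, Rmin.
  repeat destruct Rle_dec; (split; [lra | split; [lra | intros [? ?] [? ?]; split; lra]]).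
Qed.

Lemma clipped_slots_total a b w (q : nat -> nat) M eta : a <= b -> 0 < w -> 0 < eta ->
  (forall r1 r2, (r1 < M)%nat -> (r2 < M)%nat -> q r1 = q r2 -> r1 = r2) ->
  rsum (fun r => clip_hi b (INR (q r) * w) w - clip_lo a b (INR (q r) * w) w eta) M
  <= b - a + eta * INR M.
Proof.
  intros Hab Hw Heta Hq.
  apply Rle_trans with (rsum (fun r => clip a b (INR (q r) * w) w + eta) M).
  { apply rsum_le. intros r _. apply (clipped_interval _ _ _ _ _ 0 Heta). }
  rewrite rsum_plus, rsum_const.
  pose proof (clip_sum_injective a b w q M Hab (Rlt_le _ _ Hw) Hq). lra.
Qed.

Lemma divmod_block i r M : (r < M)%nat -> ((i * M + r) / M = i /\ (i * M + r) mod M = r)%nat.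
Proof.
  intros H. replace (i * M + r)%nat with (r + i * M)%nat by lia. split.
  - rewrite Nat.div_add by lia. rewrite Nat.div_small by auto. lia.
  - rewrite Nat.Div0.mod_add. apply Nat.mod_small; auto.
Qed.

Lemma ol_piecewise_shift E m w (q : nat -> nat) (t : nat -> R) M :
  outer_le E m -> 0 < w ->
  (forall r1 r2, (r1 < M)%nat -> (r2 < M)%nat -> q r1 = q r2 -> r1 = r2) ->
  outer_le (fun y => exists r, (r < M)%nat /\ exists x, E x /\
              INR (q r) * w <= x < INR (q r) * w + w /\ y = x + t r) m.
Proof.
  intros HE Hw Hq. pose proof (ol_nonneg E m HE) as Hm.
  destruct (Nat.eq_dec M 0) as [M0|MP].
  { eapply ol_mono. { apply ol_empty. } 2: exact Hm. intros y [r [Hr _]]. lia. }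
  apply ol_intro. intros eps Heps.
  destruct (ol_elim E m (eps/2) HE ltac:(lra)) as [a [b [H1 [H2 H3]]]].
  (* covering interval [i] of [E], clipped to slot [r] and translated, is interval [i * M + r] *)
  set (eta := fun i => (eps / 2) / INR M * (/2) ^ (S i)).
  assert (HMpos : 0 < INR M) by (apply lt_0_INR; lia).
  assert (Heta : forall i, 0 < eta i).
  { intros i. apply Rmult_lt_0_compat. { apply Rdiv_lt_0_compat; lra. } apply pow_lt; lra. }
  set (c := fun r => INR (q r) * w).
  set (hi := fun n => clip_hi (b (n / M)%nat) (c (n mod M)%nat) w).
  set (lo := fun n => clip_lo (a (n / M)%nat) (b (n / M)%nat) (c (n mod M)%nat) w (eta (n / M)%nat)).
  assert (Hlohi : forall n, lo n <= hi n) by (intros n; apply (clipped_interval _ _ _ _ _ 0 (Heta _))).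
  exists (fun n => lo n + t (n mod M)%nat), (fun n => hi n + t (n mod M)%nat).
  repeat split.
  - intros n. specialize (Hlohi n). lra.
  - intros y [r [Hr [x [Ex [Hx ->]]]]]. destruct (H2 x Ex) as [i Hi].
    exists (i * M + r)%nat. destruct (divmod_block i r M Hr) as [D1 D2].
    destruct (clipped_interval (a i) (b i) (c r) w (eta i) x (Heta _)) as [_ [_ Hin]].
    unfold lo, hi. rewrite D1, D2. specialize (Hin Hi Hx). lra.
  - intros n. set (I := S (n / M)).
    apply Rle_trans with (rsum (fun n => hi n - lo n) (I * M)).
    { apply Rle_trans with (rsum (fun n => hi n - lo n) n). { right. apply rsum_ext. intros; lra. }
      apply rsum_mono. { intros n'. specialize (Hlohi n'). lra. }
      unfold I. pose proof (Nat.div_mod_eq n M). pose proof (Nat.mod_upper_bound n M MP). nia. }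
    rewrite rsum_block.
    apply Rle_trans with (rsum (fun i => (b i - a i) + eta i * INR M) I).
    { apply rsum_le. intros i Hi. eapply Rle_trans. 2: apply (clipped_slots_total _ _ w q M); auto.
      right. apply rsum_ext. intros r Hr. destruct (divmod_block i r M Hr) as [D1 D2].
      unfold lo, hi. rewrite D1, D2. reflexivity. }
    rewrite rsum_plus. specialize (H3 I).
    assert (rsum (fun i => eta i * INR M) I <= eps / 2).
    { apply Rle_trans with (rsum (fun i => (eps/2) * (/2) ^ (S i)) I).
      { right. apply rsum_ext. intros i _. unfold eta. field. lra. }
      apply geom_rsum_le. lra. }
    lra.
Qed.

(** ** The columns as permutations of slots *)

Open Scope nat_scope.

Section Construction.

Variable s : nat -> nat -> nat.

(** [C_{n+1}] is made of [r_n] copies of [C_n] and the spacers above them. *)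
Hypothesis spacer_total :
  forall n, list_sum (map (fun k => hgt n + s n k)%nat (seq 0 (rN n))) = hgt (S n).

(** [slot_list m] lists, bottom to top, the positions (in units of the width [w_m]) of the
    levels of [C_m]; it follows the recursion defining [col]. *)
Fixpoint slot_list (m : nat) : list nat :=
  match m with
  | O => [0]
  | S m' => flat_map (fun k => map (fun q => q * rN m' + k) (slot_list m')
                 ++ map (fun t => length (slot_list m') * rN m' + spacers_before s m' k + t)
                        (seq 0 (s m' k)))
             (seq 0 (rN m'))
  end.

Definition slot (m c : nat) : nat := nth c (slot_list m) 0.

(** Index in [C_{m+1}] of the bottom level of its [k]-th copy of [C_m]. *)
Definition copy_start (m k : nat) : nat := psum (fun k => hgt m + s m k) k.

Definition spacer_start (m k : nat) : nat := psum (s m) k.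

Lemma copy_start_S m k : copy_start m (S k) = copy_start m k + hgt m + s m k.
Proof. unfold copy_start. rewrite psum_S. lia. Qed.

Lemma copy_start_total m : copy_start m (rN m) = hgt (S m).
Proof. unfold copy_start. rewrite <- spacer_total. reflexivity. Qed.

Lemma copy_start_mono m k1 k2 : k1 <= k2 -> copy_start m k1 <= copy_start m k2.
Proof. apply psum_mono. Qed.

Lemma copy_start_lt m k1 k2 : k1 < k2 -> copy_start m k1 + hgt m + s m k1 <= copy_start m k2.
Proof. intros. rewrite <- copy_start_S. apply copy_start_mono. lia. Qed.

Lemma hgt_S m : hgt (S m) = rN m * hgt m + spacer_start m (rN m).
Proof.
  rewrite <- copy_start_total. unfold copy_start, spacer_start.
  rewrite psum_plus, psum_const. lia.
Qed.

Lemma length_slot_list m : length (slot_list m) = hgt m.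
Proof.
  induction m. { reflexivity. }
  simpl. rewrite length_flat_map_seq, <- copy_start_total.
  unfold copy_start, psum. f_equal. apply map_ext. intros k.
  rewrite length_app, !length_map, length_seq. lia.
Qed.

Lemma slot_list_block m k :
  copy_start m k = psum (fun k => length (map (fun q => q * rN m + k) (slot_list m)
      ++ map (fun t => length (slot_list m) * rN m + spacers_before s m k + t) (seq 0 (s m k)))) k.
Proof.
  unfold copy_start, psum. f_equal. apply map_ext. intros.
  rewrite length_app, !length_map, length_seq, length_slot_list. lia.
Qed.

Lemma slot_copy m k j : k < rN m -> j < hgt m ->
  slot (S m) (copy_start m k + j) = slot m j * rN m + k.
Proof.
  intros Hk Hj. unfold slot. simpl. rewrite slot_list_block, nth_flat_map_seq; auto.
  - rewrite app_nth1 by (rewrite length_map, length_slot_list; lia).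
    rewrite (nth_map' _ _ _ 0) by (rewrite length_slot_list; lia). reflexivity.
  - rewrite length_app, length_map, length_slot_list. lia.
Qed.

Lemma slot_spacer m k t : k < rN m -> t < s m k ->
  slot (S m) (copy_start m k + hgt m + t) = hgt m * rN m + spacer_start m k + t.
Proof.
  intros Hk Ht. unfold slot. simpl.
  replace (copy_start m k + hgt m + t) with (copy_start m k + (hgt m + t)) by lia.
  rewrite slot_list_block, nth_flat_map_seq; auto.
  - rewrite app_nth2 by (rewrite length_map, length_slot_list; lia).
    rewrite length_map, length_slot_list. replace (hgt m + t - hgt m) with t by lia.
    rewrite (nth_map' _ _ _ 0) by (rewrite length_seq; lia).
    rewrite seq_nth by lia. reflexivity.
  - rewrite length_app, !length_map, length_seq, length_slot_list. lia.
Qed.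

Lemma level_decomp m c : c < hgt (S m) ->
  exists k, k < rN m /\ ((exists j, j < hgt m /\ c = copy_start m k + j) \/
                         (exists t, t < s m k /\ c = copy_start m k + hgt m + t)).
Proof.
  intros H. rewrite <- copy_start_total in H. unfold copy_start in H.
  destruct (psum_decomp _ _ _ H) as [k [Hk [H1 H2]]].
  exists k. split; auto. fold (copy_start m k) in *.
  destruct (Nat.lt_ge_cases (c - copy_start m k) (hgt m)).
  - left. exists (c - copy_start m k). split; lia.
  - right. exists (c - copy_start m k - hgt m). split; lia.
Qed.

Lemma slot_lt m c : c < hgt m -> slot m c < hgt m.
Proof.
  revert c. induction m; intros c Hc.
  - unfold hgt, e_exp in *. simpl in *. unfold slot. simpl. destruct c; simpl; lia.
  - destruct (level_decomp m c Hc) as [k [Hk [[j [Hj ->]]|[t [Ht ->]]]]].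
    + rewrite slot_copy by auto. specialize (IHm j Hj). rewrite hgt_S. nia.
    + rewrite slot_spacer by auto. rewrite hgt_S.
      pose proof (psum_lt_le (s m) k (rN m) Hk). unfold spacer_start. lia.
Qed.

Lemma slot_inj m c1 c2 : c1 < hgt m -> c2 < hgt m -> slot m c1 = slot m c2 -> c1 = c2.
Proof.
  revert c1 c2. induction m; intros c1 c2 H1 H2 E.
  { unfold hgt, e_exp in *. simpl in *. lia. }
  destruct (level_decomp m c1 H1) as [k1 [Hk1 [[j1 [Hj1 ->]]|[t1 [Ht1 ->]]]]];
  destruct (level_decomp m c2 H2) as [k2 [Hk2 [[j2 [Hj2 ->]]|[t2 [Ht2 ->]]]]].
  - rewrite !slot_copy in E by auto. apply mul_add_inj in E; try lia. destruct E as [E1 ->].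
    rewrite (IHm j1 j2); auto.
  - rewrite slot_copy, slot_spacer in E by auto. pose proof (slot_lt m j1 Hj1). nia.
  - rewrite slot_copy, slot_spacer in E by auto. pose proof (slot_lt m j2 Hj2). nia.
  - rewrite !slot_spacer in E by auto.
    assert (k1 = k2) by (apply (psum_block_inj (s m) k1 k2 t1 t2); auto; unfold spacer_start in E; lia).
    subst. f_equal. lia.
Qed.

Lemma slot_surj m q : q < hgt m -> exists c, c < hgt m /\ slot m c = q.
Proof.
  revert q. induction m; intros q Hq.
  { unfold hgt, e_exp in *; simpl in *. exists 0. split; [lia|]. unfold slot; simpl. lia. }
  rewrite hgt_S in Hq. pose proof (rN_pos m).
  destruct (Nat.lt_ge_cases q (hgt m * rN m)) as [L|L].
  - destruct (IHm (q / rN m)) as [j [Hj Ej]]. { apply Nat.Div0.div_lt_upper_bound. lia. }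
    pose proof (Nat.mod_upper_bound q (rN m) ltac:(lia)).
    exists (copy_start m (q mod rN m) + j). split.
    + pose proof (copy_start_lt m (q mod rN m) (rN m) ltac:(lia)).
      rewrite copy_start_total in *. lia.
    + rewrite slot_copy by auto. rewrite Ej, Nat.mul_comm. symmetry. apply Nat.div_mod. lia.
  - assert (q - hgt m * rN m < psum (s m) (rN m)) as Hsp by (unfold spacer_start in Hq; lia).
    destruct (psum_decomp _ _ _ Hsp) as [k [Hk [H1 H2]]].
    exists (copy_start m k + hgt m + (q - hgt m * rN m - psum (s m) k)). split.
    + pose proof (copy_start_lt m k (rN m) Hk). rewrite copy_start_total in *. lia.
    + rewrite slot_spacer by (auto; lia). unfold spacer_start. lia.
Qed.

(** ** Geometry of the columns *)

Local Notation wd := (width rN).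
Local Notation ls := (level_start rN s).

Lemma INR_rN_pos m : (0 < INR (rN m))%R.
Proof. apply lt_0_INR, rN_pos. Qed.

Lemma width_pos m : (0 < wd m)%R.
Proof.
  induction m. { simpl. lra. }
  simpl. apply Rdiv_lt_0_compat; auto. apply INR_rN_pos.
Qed.

Lemma col_slots m : col rN s m = map (fun q => INR q * wd m)%R (slot_list m).
Proof.
  induction m. { simpl. f_equal. lra. }
  simpl col. simpl slot_list. rewrite map_flat_map'. apply flat_map_ext. intros k.
  rewrite map_app, IHm, !map_map, length_map. pose proof (INR_rN_pos m).
  f_equal; apply map_ext; intros; simpl width; rewrite ?plus_INR, ?mult_INR; field; lra.
Qed.

Lemma length_col m : length (col rN s m) = hgt m.
Proof. rewrite col_slots, length_map. apply length_slot_list. Qed.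

Lemma level_start_slot m c : ls m c = (INR (slot m c) * wd m)%R.
Proof.
  unfold level_start, slot. rewrite col_slots.
  destruct (Nat.lt_ge_cases c (length (slot_list m))).
  - rewrite (nth_map' _ _ _ 0%nat) by auto. reflexivity.
  - rewrite !nth_overflow; auto. { simpl; lra. } rewrite length_map; auto.
Qed.

(** [copies m d = r_m r_{m+1} ... r_{m+d-1}] is the number of copies of [C_m] in
    [C_{m+d}]; it is also the ratio of the widths. *)
Fixpoint copies (m d : nat) : nat :=
  match d with O => 1 | S d' => copies m d' * rN (m + d') end.

Lemma copies_pos m d : 0 < copies m d.
Proof. induction d; simpl. { lia. } pose proof (rN_pos (m + d)). nia. Qed.

Lemma copies_ge m d : d + 1 <= copies m d.
Proof. induction d. { simpl. lia. } simpl. unfold rN. nia. Qed.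

Lemma width_copies m d : wd m = (INR (copies m d) * wd (m + d))%R.
Proof.
  induction d. { simpl. rewrite Nat.add_0_r. lra. }
  rewrite IHd. simpl copies. rewrite Nat.add_succ_r. simpl width. rewrite mult_INR.
  pose proof (INR_rN_pos (m + d)). field. lra.
Qed.

Lemma hgt_copies m d : hgt m * copies m d <= hgt (m + d).
Proof.
  induction d. { simpl. rewrite Nat.add_0_r. lia. }
  simpl copies. rewrite Nat.add_succ_r, hgt_S. nia.
Qed.

(** The copies of [C_m] inside [C_{m+d}], as pairs (index of the bottom level in
    [C_{m+d}], position of the copy among the [copies m d] sublevels of a level of [C_m]). *)
Fixpoint copy_positions (m d : nat) : list (nat * nat) :=
  match d with
  | O => [(0, 0)]
  | S d' => flat_map (fun k => map (fun p => (copy_start (m + d') k + fst p, snd p * rN (m + d') + k))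
                                   (copy_positions m d'))
                     (seq 0 (rN (m + d')))
  end.

Lemma copy_position_spec m d p : In p (copy_positions m d) ->
  snd p < copies m d /\ fst p + hgt m <= hgt (m + d) /\
  forall j, j < hgt m -> slot (m + d) (fst p + j) = slot m j * copies m d + snd p.
Proof.
  revert p. induction d; intros p Hp.
  - simpl in Hp. destruct Hp as [<-|[]]. simpl. rewrite Nat.add_0_r. repeat split; lia.
  - simpl in Hp. apply in_flat_map in Hp. destruct Hp as [k [Hk Hp]].
    apply in_seq in Hk. apply in_map_iff in Hp. destruct Hp as [q [<- Hq]].
    destruct (IHd q Hq) as [A [B C]]. simpl fst; simpl snd. rewrite Nat.add_succ_r.
    simpl copies. repeat split.
    + nia.
    + pose proof (copy_start_lt (m + d) k (rN (m + d)) ltac:(lia)).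
      rewrite copy_start_total in *. lia.
    + intros j Hj. rewrite <- Nat.add_assoc, slot_copy by lia. rewrite C by auto. nia.
Qed.

Lemma deep_level_cases m d c : c < hgt (m + d) ->
  (exists p, In p (copy_positions m d) /\ exists j, j < hgt m /\ c = fst p + j) \/
  hgt m * copies m d <= slot (m + d) c.
Proof.
  revert c. induction d; intros c Hc.
  { left. exists (0, 0). split. { simpl; auto. } exists c. rewrite Nat.add_0_r in Hc. simpl. lia. }
  rewrite Nat.add_succ_r in *. simpl copies.
  destruct (level_decomp (m + d) c Hc) as [k [Hk [[j0 [Hj0 ->]]|[t [Ht ->]]]]].
  - destruct (IHd j0 Hj0) as [[p [Hp [j [Hj ->]]]]|L].
    + left. exists (copy_start (m + d) k + fst p, snd p * rN (m + d) + k). split.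
      * simpl. apply in_flat_map. exists k. split. { apply in_seq; lia. }
        apply in_map_iff. exists p. auto.
      * exists j. simpl. lia.
    + right. rewrite slot_copy by auto. nia.
  - right. rewrite slot_spacer by auto. pose proof (hgt_copies m d). nia.
Qed.

Definition in_level (n c : nat) (x : R) : Prop :=
  c < hgt n /\ (ls n c <= x < ls n c + wd n)%R.

(** [C_m] occupies [[0, col_length m)]. *)
Definition col_length (m : nat) : R := (INR (hgt m) * wd m)%R.

Lemma slot_interval_unique (p q : nat) (w x : R) : (0 < w)%R ->
  (INR p * w <= x < INR p * w + w)%R -> (INR q * w <= x < INR q * w + w)%R -> p = q.
Proof.
  intros Hw [H1 H2] [H3 H4].
  destruct (Nat.lt_trichotomy p q) as [L|[L|L]]; auto;
    apply le_INR in L; rewrite S_INR in L; nra.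
Qed.

Lemma slot_interval_exists (N : nat) (w x : R) : (0 < w)%R -> (0 <= x)%R -> (x < INR N * w)%R ->
  exists q, q < N /\ (INR q * w <= x < INR q * w + w)%R.
Proof.
  intros Hw Hx. induction N; intros H. { simpl in H. lra. }
  destruct (Rlt_le_dec x (INR N * w)) as [L|L].
  - destruct (IHN L) as [q [Hq Hq2]]. exists q. split; auto.
  - exists N. split; auto. rewrite S_INR in H. lra.
Qed.

Lemma in_level_lt_length n c x : in_level n c x -> (x < col_length n)%R.
Proof.
  intros [Hc [H1 H2]]. rewrite level_start_slot in *. unfold col_length.
  pose proof (slot_lt n c Hc) as H. apply le_INR in H. rewrite S_INR in H.
  pose proof (width_pos n). nra.
Qed.

Lemma in_level_unique n i j x : in_level n i x -> in_level n j x -> i = j.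
Proof.
  intros [Hi [H1 H2]] [Hj [H3 H4]]. rewrite !level_start_slot in *.
  apply (slot_inj n); auto. apply (slot_interval_unique _ _ (wd n) x); auto. apply width_pos.
Qed.

Lemma in_level_copy m d p j x : In p (copy_positions m d) -> j < hgt m ->
  in_level (m + d) (fst p + j) x -> in_level m j x.
Proof.
  intros Hp Hj [Hc [H1 H2]]. destruct (copy_position_spec m d p Hp) as [A [B C]].
  split; auto. rewrite !level_start_slot, C in * by auto.
  rewrite (width_copies m d). rewrite plus_INR, mult_INR in *.
  apply le_INR in A. rewrite S_INR in A.
  pose proof (width_pos (m + d)). pose proof (pos_INR (snd p)). split; nra.
Qed.

Lemma in_level_beyond m d c x : hgt m * copies m d <= slot (m + d) c ->
  in_level (m + d) c x -> (col_length m <= x)%R.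
Proof.
  intros H [Hc [H1 H2]]. rewrite level_start_slot in *. unfold col_length. rewrite (width_copies m d).
  apply le_INR in H. rewrite mult_INR in H. pose proof (width_pos (m + d)). nra.
Qed.

Lemma T_rel_compatible n d i i' x :
  S i < hgt n -> in_level n i x -> S i' < hgt (n + d) -> in_level (n + d) i' x ->
  (x - ls n i + ls n (S i) = x - ls (n + d) i' + ls (n + d) (S i'))%R.
Proof.
  intros Hi Hx Hi' Hx'.
  destruct (deep_level_cases n d i' ltac:(lia)) as [[p [Hp [j [Hj ->]]]]|L].
  - pose proof (in_level_unique n i j x Hx (in_level_copy n d p j x Hp Hj Hx')). subst j.
    destruct (copy_position_spec n d p Hp) as [A [B C]].
    replace (S (fst p + i)) with (fst p + S i) by lia.
    rewrite !level_start_slot, !C by lia. rewrite (width_copies n d), !plus_INR, !mult_INR. ring.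
  - pose proof (in_level_beyond n d i' x L Hx'). pose proof (in_level_lt_length n i x Hx). lra.
Qed.

Lemma T_rel_functional x y1 y2 : T_rel rN s x y1 -> T_rel rN s x y2 -> y1 = y2.
Proof.
  intros [n [i [Hi [Hx ->]]]] [n' [i' [Hi' [Hx' ->]]]].
  rewrite length_col in Hi, Hi'.
  destruct (Nat.le_ge_cases n n') as [L|L].
  - replace n' with (n + (n' - n)) in * by lia.
    apply (T_rel_compatible n (n' - n) i i' x); auto; split; auto; lia.
  - replace n with (n' + (n - n')) in * by lia. symmetry.
    apply (T_rel_compatible n' (n - n') i' i x); auto; split; auto; lia.
Qed.

Lemma T_on_level n i x : in_level n i x -> S i < hgt n -> T rN s x = (x - ls n i + ls n (S i))%R.
Proof.
  intros Hx Hi.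
  assert (HT : T_rel rN s x (x - ls n i + ls n (S i))%R).
  { exists n, i. rewrite length_col. destruct Hx. auto. }
  apply (T_rel_functional x). { unfold T. apply epsilon_spec. eauto. } auto.
Qed.

Lemma T_iter_on_level n i x k : in_level n i x -> i + k < hgt n ->
  Nat.iter k (T rN s) x = (x - ls n i + ls n (i + k))%R /\ in_level n (i + k) (Nat.iter k (T rN s) x).
Proof.
  intros Hx. induction k; intros Hk.
  { simpl. rewrite Nat.add_0_r. split; [lra|auto]. }
  destruct (IHk ltac:(lia)) as [E H]. rewrite Nat.iter_succ.
  rewrite (T_on_level n (i + k)) by (auto; lia). rewrite E.
  replace (i + S k) with (S (i + k)) by lia.
  split. { lra. }
  destruct Hx as [_ [H1 H2]]. split. { lia. }
  destruct H as [_ [H3 H4]]. rewrite E in *. lra.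
Qed.

Lemma ol_levels N (J : list nat) :
  outer_le (fun y => exists j, In j J /\ in_level N j y) (INR (length J) * wd N).
Proof.
  induction J as [|j J IH].
  { eapply ol_mono. { apply ol_empty. } { intros y [j [[] _]]. } simpl; lra. }
  eapply ol_mono.
  - apply ol_union. 2: exact IH. apply (ol_interval (ls N j) (ls N j + wd N)).
    pose proof (width_pos N). lra.
  - intros y [j' [[<-|Hj'] Hy]].
    + left. apply Hy.
    + right. exists j'. auto.
  - simpl length. rewrite S_INR. lra.
Qed.

(** ** The prescribed sets [H_n] *)

(** [H_n] is the set of bottom indices of the copies of [C_n] inside [C_{n+1}]. *)
Hypothesis prescribed_H : forall n m, H_of rN s hgt n m <-> H_set n m.

Lemma H_of_copy_start j m : H_of rN s hgt j m <-> exists k, k <= S j /\ m = copy_start j k.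
Proof.
  unfold H_of, rN. split.
  - intros [->|[i [Hi ->]]]. { exists 0. split; [lia|reflexivity]. }
    exists (S i). split; [lia|reflexivity].
  - intros [k [Hk ->]]. destruct k. { left. reflexivity. } right. exists k. split; [lia|reflexivity].
Qed.

Lemma copy_start_formula j k : k <= S j -> copy_start j k = hgt j * psi j k.
Proof.
  pose proof (hgt_pos j).
  apply (strict_mono_same_range (copy_start j) (fun k => hgt j * psi j k) (S j)).
  - intros a b Hab _. pose proof (copy_start_lt j a b Hab). lia.
  - intros a b Hab Hb. pose proof (psi_lt j a b Hab Hb). nia.
  - intros k' Hk'. apply H_set_psi, prescribed_H, H_of_copy_start. eauto.
  - intros k' Hk'. apply H_of_copy_start, prescribed_H, H_set_psi. eauto.
Qed.

Lemma copy_start_last n : copy_start n (S n) <= hgt n * 5 ^ n.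
Proof. rewrite copy_start_formula by lia. pose proof (psi_le_last n (S n) ltac:(lia)). nia. Qed.

(** ** Returns to a level *)

Lemma col_length_double m : (2 * col_length m <= col_length (S m))%R.
Proof.
  unfold col_length. simpl width. rewrite hgt_S5. pose proof (pow5_ge m) as H.
  apply le_INR in H. rewrite !mult_INR in *. replace (INR 2) with 2%R in H by (simpl; lra).
  change (m + 2) with (rN m) in H.
  pose proof (INR_rN_pos m). pose proof (width_pos m). pose proof (pos_INR (hgt m)).
  set (h := INR (hgt m)) in *. set (P := INR (5 ^ S m)) in *.
  set (r := INR (rN m)) in *. set (ww := wd m) in *.
  replace (h * P * (ww / r))%R with ((h * ww / r) * P)%R by (field; lra).
  assert (0 <= h * ww / r)%R by (apply Rmult_le_pos; [nra | left; apply Rinv_0_lt_compat; lra]).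
  apply Rle_trans with ((h * ww / r) * (2 * r))%R. { right. field. lra. }
  apply Rmult_le_compat_l; lra.
Qed.

Lemma col_length_ge m : (INR m + 1 <= col_length m)%R.
Proof.
  induction m. { unfold col_length. simpl. lra. }
  pose proof (col_length_double m). rewrite S_INR. pose proof (pos_INR m). lra.
Qed.

Lemma col_length_mono m d : (col_length m <= col_length (m + d))%R.
Proof.
  induction d. { rewrite Nat.add_0_r. lra. }
  rewrite Nat.add_succ_r. pose proof (col_length_double (m + d)).
  assert (0 <= col_length (m + d))%R
    by (unfold col_length; apply Rmult_le_pos; [apply pos_INR | left; apply width_pos]).
  lra.
Qed.

(** Every point of [[0, ∞)] lies in a level of some [C_n], [n >= N0], with at least [k]
    levels above it: take it in a copy of [C_m] inside [C_{m+1}], below the last copy. *)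
Lemma point_in_deep_level x k N0 : (0 <= x)%R ->
  exists n, N0 <= n /\ exists c, c + k < hgt n /\ in_level n c x.
Proof.
  intros Hx. destruct (exists_nat_gt x) as [m0 Hm0].
  set (m := Nat.max (Nat.max N0 k) m0).
  assert (Hxm : (x < col_length m)%R).
  { pose proof (col_length_ge m). assert (m0 <= m) as Hle by lia. apply le_INR in Hle. lra. }
  exists (S m). split. { lia. }
  assert (Hx2 : (x < INR (hgt m * rN m) * wd (S m))%R).
  { unfold col_length in Hxm. rewrite mult_INR. simpl width. pose proof (INR_rN_pos m).
    replace (INR (hgt m) * INR (rN m) * (wd m / INR (rN m)))%R with (INR (hgt m) * wd m)%R
      by (field; lra). lra. }
  destruct (slot_interval_exists _ _ _ (width_pos (S m)) Hx Hx2) as [q [Hq Hq2]].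
  assert (q < hgt (S m)) by (rewrite hgt_S; nia).
  destruct (slot_surj (S m) q ltac:(lia)) as [c [Hc Ec]].
  exists c. split. 2: { split; auto. rewrite level_start_slot, Ec. auto. }
  destruct (level_decomp m c Hc) as [kk [Hk [[j [Hj ->]]|[t [Ht ->]]]]].
  - pose proof (copy_start_mono m kk (S m) ltac:(unfold rN in Hk; lia)).
    pose proof (copy_start_last m). rewrite hgt_S5, Nat.pow_succ_r'.
    pose proof (pow5_lt m). pose proof (hgt_pos m). nia.
  - rewrite slot_spacer in Ec by auto. nia.
Qed.

Lemma iterate_back N x k : (0 <= x)%R -> (Nat.iter k (T rN s) x < col_length N)%R ->
  exists j, j < hgt N /\ in_level N j (Nat.iter k (T rN s) x) /\
    (j < k \/ (k <= j /\ in_level N (j - k) x /\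
       Nat.iter k (T rN s) x = (x + (INR (slot N j) - INR (slot N (j - k))) * wd N)%R)).
Proof.
  intros Hx Hy.
  destruct (point_in_deep_level x k N Hx) as [n [Hn [c [Hc Hin]]]].
  destruct (T_iter_on_level n c x k Hin ltac:(lia)) as [E Hin2].
  replace n with (N + (n - N)) in * by lia. set (d := n - N) in *.
  destruct (deep_level_cases N d (c + k) ltac:(lia)) as [[p [Hp [j [Hj Ej]]]]|L].
  2: { pose proof (in_level_beyond N d (c + k) _ L Hin2). lra. }
  exists j. split; auto. rewrite Ej in Hin2. split. { apply (in_level_copy N d p j); auto. }
  destruct (Nat.lt_ge_cases j k) as [L|L]. { left; auto. }
  right. split; auto.
  assert (Ec : c = fst p + (j - k)) by lia. rewrite Ec in Hin. split.
  { apply (in_level_copy N d p (j - k)); auto. lia. }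
  rewrite E, Ec. destruct (copy_position_spec N d p Hp) as [A [B C]].
  replace (fst p + (j - k) + k) with (fst p + j) by lia.
  rewrite !level_start_slot, !C by lia. rewrite (width_copies N d), !plus_INR, !mult_INR. ring.
Qed.

Lemma low_level_in_copy n0 d c y : in_level (n0 + d) c y -> (y < col_length n0)%R ->
  exists p, In p (copy_positions n0 d) /\ exists j, j < hgt n0 /\ c = fst p + j.
Proof.
  intros Hin Hy. destruct (deep_level_cases n0 d c (proj1 Hin)) as [H|L]; auto.
  pose proof (in_level_beyond n0 d c y L Hin). lra.
Qed.

(** ** Near coincidences between copy starts

    [near_pair j m z k k'] records that the copies [k <> k'] of [C_j] inside [C_{j+1}]
    have starting indices differing by [z] up to an error [m]. *)

Definition near_pair (j m : nat) (z : Z) (k k' : nat) : nat :=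
  if k =? k' then 0
  else if Z.leb (Z.abs (z + Z.of_nat (copy_start j k) - Z.of_nat (copy_start j k'))) (Z.of_nat m)
       then 1 else 0.

Definition near_pairs (j m : nat) (z : Z) : nat :=
  list_sum (map (fun k => list_sum (map (fun k' => near_pair j m z k k') (seq 0 (rN j))))
    (seq 0 (rN j))).

Lemma near_pair_gap j m z k k' : 4 * m <= hgt j -> (0 <= z)%Z -> k < rN j -> k' < rN j ->
  near_pair j m z k k' <> 0 ->
  (1 <= Z.of_nat (psi j k') - Z.of_nat (psi j k))%Z /\
  (Z.abs (z - Z.of_nat (hgt j) * (Z.of_nat (psi j k') - Z.of_nat (psi j k))) <= Z.of_nat m)%Z.
Proof.
  intros Hm Hz Hk Hk' Q. unfold near_pair in Q. unfold rN in *.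
  destruct (Nat.eqb_spec k k'); [lia|].
  destruct (Z.leb_spec (Z.abs (z + Z.of_nat (copy_start j k) - Z.of_nat (copy_start j k')))
    (Z.of_nat m)) as [L|]; [|lia].
  rewrite !copy_start_formula, !Nat2Z.inj_mul in L by lia.
  assert (psi j k <> psi j k') by (intro E; apply (psi_inj j) in E; lia).
  pose proof (hgt_pos j).
  replace (z + Z.of_nat (hgt j) * Z.of_nat (psi j k) - Z.of_nat (hgt j) * Z.of_nat (psi j k'))%Z
    with (z - Z.of_nat (hgt j) * (Z.of_nat (psi j k') - Z.of_nat (psi j k)))%Z in L by ring.
  split; auto.
  destruct (Z.le_gt_cases 1 (Z.of_nat (psi j k') - Z.of_nat (psi j k))) as [G|G]; auto.
  exfalso. assert (Z.of_nat (psi j k') - Z.of_nat (psi j k) <= -1)%Z by lia. nia.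
Qed.

(** Since [4 m <= h_j], all near pairs for a given [z] realise the same gap. *)
Lemma near_pair_gap_unique j m z k1 k1' k k' : 4 * m <= hgt j -> (0 <= z)%Z ->
  k1 < rN j -> k1' < rN j -> k < rN j -> k' < rN j ->
  near_pair j m z k1 k1' <> 0 -> near_pair j m z k k' <> 0 ->
  (Z.of_nat (psi j k') - Z.of_nat (psi j k) = Z.of_nat (psi j k1') - Z.of_nat (psi j k1))%Z.
Proof.
  intros Hm Hz Hk1 Hk1' Hk Hk' Q1 Q.
  destruct (near_pair_gap j m z k1 k1' Hm Hz Hk1 Hk1' Q1) as [_ B1].
  destruct (near_pair_gap j m z k k' Hm Hz Hk Hk' Q) as [_ B2].
  pose proof (hgt_pos j).
  set (X := (Z.of_nat (psi j k1') - Z.of_nat (psi j k1))%Z) in *.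
  set (Y := (Z.of_nat (psi j k') - Z.of_nat (psi j k))%Z) in *.
  destruct (Z.lt_trichotomy Y X) as [L|[L|L]]; auto; exfalso.
  - assert (X - Y >= 1)%Z by lia. nia.
  - assert (Y - X >= 1)%Z by lia. nia.
Qed.

(** Hence near pairs realise a single positive gap, counted by [gap_count_bound]. *)
Lemma near_pairs_count j m z : 4 * m <= hgt j -> (0 <= z)%Z ->
  near_pairs j m z <= Nat.sqrt_up j + 2.
Proof.
  intros Hm Hz. destruct (Nat.eq_dec (near_pairs j m z) 0) as [Z0|NZ]. { lia. }
  destruct (lsum_nonzero _ _ NZ) as [k1 [Hk1 E1]].
  destruct (lsum_nonzero _ _ E1) as [k1' [Hk1' E1']]. apply in_seq in Hk1, Hk1'.
  destruct (near_pair_gap j m z k1 k1' Hm Hz ltac:(lia) ltac:(lia) E1') as [X1 _].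
  set (X := (Z.of_nat (psi j k1') - Z.of_nat (psi j k1))%Z) in *.
  eapply Nat.le_trans. 2: apply (gap_count_bound j (Z.to_nat X)); lia.
  unfold near_pairs, gap_count, rN. apply lsum_le. intros k Hk. apply lsum_le. intros k' Hk'.
  apply in_seq in Hk, Hk'.
  destruct (Nat.eq_dec (near_pair j m z k k') 0) as [Q|Q]. { rewrite Q. lia. }
  pose proof (near_pair_gap_unique j m z k1 k1' k k' Hm Hz ltac:(unfold rN in *; lia)
    ltac:(unfold rN in *; lia) ltac:(unfold rN in *; lia) ltac:(unfold rN in *; lia) E1' Q).
  destruct (Nat.eqb_spec (psi j k') (psi j k + Z.to_nat X)); [|lia].
  unfold near_pair. destruct (_ =? _); [lia|]. destruct (Z.leb _ _); lia.
Qed.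

Lemma near_pairs_scale j m z : 4 * m <= hgt j -> (0 <= z)%Z -> near_pairs j m z <> 0 ->
  (3 * Z.of_nat (hgt j) <= 4 * z /\ 4 * z < Z.of_nat (hgt (S j)))%Z.
Proof.
  intros Hm Hz NZ.
  destruct (lsum_nonzero _ _ NZ) as [k1 [Hk1 E1]].
  destruct (lsum_nonzero _ _ E1) as [k1' [Hk1' E1']]. apply in_seq in Hk1, Hk1'.
  destruct (near_pair_gap j m z k1 k1' Hm Hz ltac:(lia) ltac:(lia) E1') as [X1 B1].
  set (X := (Z.of_nat (psi j k1') - Z.of_nat (psi j k1))%Z) in *.
  pose proof (hgt_pos j).
  rewrite hgt_S5, Nat2Z.inj_mul.
  assert (psi j k1' <= 5 ^ j) by (apply psi_le_last; unfold rN in *; lia).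
  assert (E5 : Z.of_nat (5 ^ S j) = (5 * Z.of_nat (5 ^ j))%Z)
    by (rewrite Nat.pow_succ_r', Nat2Z.inj_mul; lia).
  rewrite E5. assert (X <= Z.of_nat (5 ^ j))%Z by (unfold X; lia).
  assert (4 * m < hgt j * 5 ^ j).
  { destruct j. { unfold hgt, e_exp in *; simpl in *. lia. }
    assert (5 <= 5 ^ S j) by (rewrite Nat.pow_succ_r'; pose proof (Nat.pow_nonzero 5 j); lia). nia. }
  split; nia.
Qed.

(** ** Differences of offsets of copies *)

Definition diff_count (L : list nat) (z : Z) : nat :=
  list_sum (map (fun a => list_sum (map (fun b =>
    if Z.eqb (Z.of_nat b) (Z.of_nat a + z) then 1 else 0) L)) L).

(** At most one partner per element. *)
Lemma diff_count_le_length L z : NoDup L -> diff_count L z <= length L.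
Proof.
  intros ND. unfold diff_count. eapply Nat.le_trans.
  - apply (lsum_le _ (fun _ => 1)). intros a Ha. apply lsum_le_one; auto.
    { intros; destruct (Z.eqb _ _); lia. }
    intros x y _ _ Ex Ey.
    destruct (Z.eqb_spec (Z.of_nat x) (Z.of_nat a + z));
      destruct (Z.eqb_spec (Z.of_nat y) (Z.of_nat a + z)); lia.
  - rewrite lsum_const. lia.
Qed.

Lemma diff_count_far L z m : (forall g, In g L -> g <= m) -> (Z.of_nat m < Z.abs z)%Z ->
  diff_count L z = 0.
Proof.
  intros Hb Hz. unfold diff_count. rewrite (lsum_ext _ (fun _ => 0)). { rewrite lsum_const. lia. }
  intros a Ha. rewrite (lsum_ext _ (fun _ => 0)). { rewrite lsum_const. lia. }
  intros b Hb2. pose proof (Hb a Ha). pose proof (Hb _ Hb2).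
  destruct (Z.eqb_spec (Z.of_nat b) (Z.of_nat a + z)); lia.
Qed.

Definition offsets (n0 d : nat) : list nat := map fst (copy_positions n0 d).

Lemma offsets_S n0 d : offsets n0 (S d) =
  flat_map (fun k => map (fun g => copy_start (n0 + d) k + g) (offsets n0 d)) (seq 0 (rN (n0 + d))).
Proof.
  unfold offsets. simpl. rewrite map_flat_map'. apply flat_map_ext. intros k.
  rewrite !map_map. reflexivity.
Qed.

Lemma length_offsets n0 d : length (offsets n0 d) = copies n0 d.
Proof.
  induction d. { reflexivity. }
  rewrite offsets_S, (flat_map_constant_length (c := length (offsets n0 d))).
  - rewrite length_seq. simpl. lia.
  - intros. rewrite length_map. auto.
Qed.

(** A bound on the offsets, small compared with [h_{n0+d}]. *)
Definition offset_bound (n0 d : nat) : nat := psum (fun i => hgt (n0 + i) * 5 ^ (n0 + i)) d.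

Lemma offsets_le n0 d g : In g (offsets n0 d) -> g <= offset_bound n0 d.
Proof.
  revert g. induction d; intros g Hg.
  - unfold offsets in Hg. simpl in Hg. destruct Hg as [<-|[]]. simpl. lia.
  - rewrite offsets_S in Hg. apply in_flat_map in Hg. destruct Hg as [k [Hk Hg]].
    apply in_seq in Hk. apply in_map_iff in Hg. destruct Hg as [g0 [<- Hg0]].
    unfold offset_bound. rewrite psum_S. fold (offset_bound n0 d). specialize (IHd g0 Hg0).
    pose proof (copy_start_mono (n0 + d) k (S (n0 + d)) ltac:(unfold rN in Hk; lia)).
    pose proof (copy_start_last (n0 + d)). lia.
Qed.

(** The offsets fill at most a quarter of [C_{n0+d}]; this makes near pairs unambiguous. *)
Lemma offset_bound_small n0 d : 4 * offset_bound n0 d <= hgt (n0 + d).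
Proof.
  induction d. { unfold offset_bound. simpl. lia. }
  unfold offset_bound. rewrite psum_S. fold (offset_bound n0 d).
  rewrite Nat.add_succ_r, hgt_S5, Nat.pow_succ_r'. pose proof (Nat.pow_nonzero 5 (n0 + d)). nia.
Qed.

Lemma offsets_nodup n0 d : NoDup (offsets n0 d).
Proof.
  induction d. { unfold offsets. simpl. constructor; [simpl; auto | constructor]. }
  rewrite offsets_S. apply NoDup_flat_map_seq.
  - intros k Hk. apply NoDup_map_NoDup_ForallPairs; auto. intros x y _ _ E. lia.
  - intros k1 k2 x Hk Hk2 H1 H2. apply in_map_iff in H1, H2.
    destruct H1 as [g1 [<- Hg1]]. destruct H2 as [g2 [E Hg2]].
    pose proof (offsets_le n0 d g1 Hg1). pose proof (offset_bound_small n0 d).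
    pose proof (hgt_pos (n0 + d)). pose proof (copy_start_lt (n0 + d) k1 k2 Hk). lia.
Qed.

(** Going one level deeper, a pair of offsets at distance [z] comes either from the same
    copy of [C_{n0+d}] (a pair at distance [z] one level up) or from a near pair. *)
Lemma diff_count_S_expand n0 d z : let P := copy_start (n0 + d) in
  diff_count (offsets n0 (S d)) z =
  list_sum (map (fun k => list_sum (map (fun k' =>
    diff_count (offsets n0 d) (z + Z.of_nat (P k) - Z.of_nat (P k'))%Z)
    (seq 0 (rN (n0 + d))))) (seq 0 (rN (n0 + d)))).
Proof.
  intros P. set (L := offsets n0 d). unfold diff_count. rewrite offsets_S.
  fold L. rewrite lsum_flat_map. apply lsum_ext. intros k Hk. rewrite map_map.
  transitivity (list_sum (map (fun a => list_sum (map (fun k' => list_sum (map (fun b =>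
    if Z.eqb (Z.of_nat b) (Z.of_nat a + (z + Z.of_nat (P k) - Z.of_nat (P k')))%Z then 1 else 0)
    L)) (seq 0 (rN (n0 + d))))) L)).
  2: { rewrite lsum_swap. reflexivity. }
  apply lsum_ext. intros a Ha. rewrite lsum_flat_map.
  apply lsum_ext. intros k' Hk'. rewrite map_map. apply lsum_ext. intros b Hb.
  fold P. rewrite !Nat2Z.inj_add.
  destruct (Z.eqb_spec (Z.of_nat (P k') + Z.of_nat b) (Z.of_nat (P k) + Z.of_nat a + z));
  destruct (Z.eqb_spec (Z.of_nat b) (Z.of_nat a + (z + Z.of_nat (P k) - Z.of_nat (P k')))); lia.
Qed.

Lemma diff_count_S n0 d z : diff_count (offsets n0 (S d)) z <=
  rN (n0 + d) * diff_count (offsets n0 d) z +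
  length (offsets n0 d) * near_pairs (n0 + d) (offset_bound n0 d) z.
Proof.
  set (j := n0 + d). set (P := copy_start j). set (L := offsets n0 d).
  rewrite diff_count_S_expand. fold j P L.
  eapply Nat.le_trans.
  - apply lsum_le. intros k Hk. apply (lsum_le _ (fun k' => (if k' =? k then 1 else 0) *
      diff_count L z + near_pair j (offset_bound n0 d) z k k' * length L)).
    intros k' Hk'. unfold near_pair. destruct (Nat.eqb_spec k' k).
    + subst. rewrite Nat.eqb_refl. replace (z + Z.of_nat (P k) - Z.of_nat (P k))%Z with z by lia. lia.
    + destruct (Nat.eqb_spec k k'); [lia|]. fold P.
      destruct (Z.leb_spec (Z.abs (z + Z.of_nat (P k) - Z.of_nat (P k'))) (Z.of_nat (offset_bound n0 d))).
      * pose proof (diff_count_le_length L (z + Z.of_nat (P k) - Z.of_nat (P k'))%Z (offsets_nodup n0 d)).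
        lia.
      * rewrite (diff_count_far L _ (offset_bound n0 d)); [lia | apply offsets_le | lia].
  - apply Nat.eq_le_incl. unfold near_pairs. fold j.
    rewrite (lsum_ext _ (fun k => diff_count L z + list_sum (map (fun k' =>
      near_pair j (offset_bound n0 d) z k k') (seq 0 (rN j))) * length L)).
    + rewrite lsum_plus, lsum_const, length_seq, lsum_mul_r. lia.
    + intros k Hk. apply in_seq in Hk. rewrite lsum_plus, !lsum_mul_r, lsum_indicator by lia.
      rewrite Nat.mul_1_l. reflexivity.
Qed.

Definition diff_density (n0 d : nat) (z : Z) : R :=
  (INR (diff_count (offsets n0 d) z) / INR (copies n0 d))%R.

(** Dividing [diff_count_S] by [copies n0 (S d) = r_{n0+d} copies n0 d]. *)
Lemma diff_density_S n0 d z : (diff_density n0 (S d) z <=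
  diff_density n0 d z + INR (near_pairs (n0 + d) (offset_bound n0 d) z) / INR (rN (n0 + d)))%R.
Proof.
  unfold diff_density. pose proof (diff_count_S n0 d z) as H. apply le_INR in H.
  rewrite length_offsets, plus_INR, !mult_INR in H. simpl copies. rewrite mult_INR.
  pose proof (lt_0_INR _ (copies_pos n0 d)). pose proof (INR_rN_pos (n0 + d)).
  set (c1 := INR (diff_count (offsets n0 (S d)) z)) in *.
  set (c0 := INR (diff_count (offsets n0 d) z)) in *.
  set (l := INR (copies n0 d)) in *. set (r := INR (rN (n0 + d))) in *.
  set (p := INR (near_pairs (n0 + d) (offset_bound n0 d) z)) in *.
  replace (c0 / l + p / r)%R with ((r * c0 + l * p) / (l * r))%R by (field; lra).
  apply Rmult_le_compat_r. { left. apply Rinv_0_lt_compat. nra. } lra.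
Qed.

(** For [z <> 0] there is no pair at depth 0, so the density is the accumulated
    contribution of the near pairs at all intermediate levels. *)
Lemma diff_density_le_sum n0 d z : z <> 0%Z -> (diff_density n0 d z <=
  rsum (fun i => INR (near_pairs (n0 + i) (offset_bound n0 i) z) / INR (rN (n0 + i))) d)%R.
Proof.
  intros Hz. induction d.
  - unfold diff_density, diff_count, offsets. simpl. destruct z; try lia; simpl; lra.
  - pose proof (diff_density_S n0 d z). simpl rsum. lra.
Qed.

(** Uniformly in the depth [d], only a small proportion of pairs of copies of [C_{n0}] are
    at a given large distance: the near pairs at level [n0 + i] are few compared with
    [r_{n0+i}], and exist for at most one [i] since they live at the scale [h_{n0+i}]. *)
Lemma difference_density_small n0 (delta : R) : (0 < delta)%R ->
  exists Z0 : nat, forall z d, (Z.of_nat Z0 <= z)%Z -> (diff_density n0 d z <= delta)%R.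
Proof.
  intros Hd. destruct (sqrt_ratio delta Hd) as [J1 HJ1].
  exists (S (hgt J1)). intros z d Hz.
  eapply Rle_trans. { apply diff_density_le_sum. lia. }
  set (np := fun i => near_pairs (n0 + i) (offset_bound n0 i) z).
  assert (Hzero : forall i, (INR (np i) / INR (rN (n0 + i)) <> 0)%R -> np i <> 0).
  { intros i E E0. apply E. rewrite E0. simpl. unfold Rdiv. lra. }
  apply rsum_at_most_one; [| |lra].
  - intros i. pose proof (INR_rN_pos (n0 + i)). split.
    { apply Rmult_le_pos. { apply pos_INR. } left. apply Rinv_0_lt_compat. lra. }
    destruct (Nat.eq_dec (np i) 0) as [E|E]. { unfold np in E. rewrite E. simpl. lra. }
    pose proof (near_pairs_scale (n0 + i) (offset_bound n0 i) z
      (offset_bound_small n0 i) ltac:(lia) E) as [B2 B3].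
    assert (J1 <= n0 + i).
    { destruct (Nat.le_gt_cases J1 (n0 + i)); auto.
      pose proof (hgt_mono (S (n0 + i)) J1 ltac:(lia)). lia. }
    pose proof (near_pairs_count (n0 + i) (offset_bound n0 i) z (offset_bound_small n0 i) ltac:(lia))
      as B1.
    apply le_INR in B1. specialize (HJ1 (n0 + i) ltac:(assumption)). unfold rN in *.
    apply Rmult_le_reg_r with (INR (n0 + i + 2)). { auto. }
    unfold Rdiv. rewrite Rmult_assoc, Rinv_l by lra. lra.
  - intros i1 i2 E1 E2. apply Hzero in E1, E2.
    pose proof (near_pairs_scale (n0 + i1) _ z (offset_bound_small n0 i1) ltac:(lia) E1) as [A1 B1].
    pose proof (near_pairs_scale (n0 + i2) _ z (offset_bound_small n0 i2) ltac:(lia) E2) as [A2 B2].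
    destruct (Nat.lt_trichotomy i1 i2) as [L|[L|L]]; auto; exfalso.
    + pose proof (hgt_mono (S (n0 + i1)) (n0 + i2) ltac:(lia)). lia.
    + pose proof (hgt_mono (S (n0 + i2)) (n0 + i1) ltac:(lia)). lia.
Qed.

(** ** The four parts of [A ∩ T^k A] *)

Definition shifted (N k : nat) (E : R -> Prop) (y : R) : Prop :=
  exists j, j < hgt N /\ k <= j /\ exists x, E x /\ in_level N (j - k) x /\
    y = (x + (INR (slot N j) - INR (slot N (j - k))) * wd N)%R.

(** [T^k] restricted to the levels [j - k] of [C_N] is a piecewise translation by slots. *)
Lemma ol_shifted N k E m : outer_le E m -> outer_le (shifted N k E) m.
Proof.
  intros HE.
  eapply ol_mono.
  - apply (ol_piecewise_shift E m (wd N) (slot N)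
      (fun r => (INR (slot N (r + k)) - INR (slot N r)) * wd N)%R (hgt N - k) HE (width_pos N)).
    intros r1 r2 H1 H2. apply slot_inj; lia.
  - intros y [j [Hj [Hk [x [Ex [[_ Hx] ->]]]]]]. exists (j - k). split. { lia. }
    exists x. rewrite level_start_slot in Hx. replace (j - k + k) with j by lia. auto.
  - lra.
Qed.

(** Levels [j] of [C_{n0+d}] such that [j] and [j - k] both lie in copies of [C_{n0}]. *)
Definition return_levels (n0 d k : nat) : list nat :=
  flat_map (fun g => flat_map (fun j0 => flat_map (fun g' => flat_map (fun j0' =>
    if (g + j0 =? g' + j0' + k)%nat then [(g + j0)%nat] else [])
    (seq 0 (hgt n0))) (offsets n0 d)) (seq 0 (hgt n0))) (offsets n0 d).

Lemma in_return_levels n0 d k g j0 g' j0' : In g (offsets n0 d) -> j0 < hgt n0 ->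
  In g' (offsets n0 d) -> j0' < hgt n0 -> g + j0 = g' + j0' + k -> In (g + j0) (return_levels n0 d k).
Proof.
  intros. unfold return_levels.
  apply in_flat_map. exists g. split; auto. apply in_flat_map. exists j0. split. { apply in_seq; lia. }
  apply in_flat_map. exists g'. split; auto. apply in_flat_map. exists j0'. split. { apply in_seq; lia. }
  rewrite H3, Nat.eqb_refl, <- H3. simpl; auto.
Qed.

(** Counting the return levels by the levels [j0], [j0'] of [C_{n0}] they come from: the
    offsets must differ by [j0' + k - j0]. *)
Lemma length_return_levels n0 d k : length (return_levels n0 d k) =
  list_sum (map (fun j0 => list_sum (map (fun j0' =>
    diff_count (offsets n0 d) (Z.of_nat j0' + Z.of_nat k - Z.of_nat j0)%Z)
    (seq 0 (hgt n0)))) (seq 0 (hgt n0))).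
Proof.
  set (L := offsets n0 d). set (h := seq 0 (hgt n0)).
  unfold return_levels. fold L h. rewrite length_flat_map.
  set (f := fun g j0 g' j0' => if (g + j0 =? g' + j0' + k)%nat then 1 else 0).
  transitivity (list_sum (map (fun g => list_sum (map (fun j0 => list_sum (map (fun g' =>
    list_sum (map (fun j0' => f g j0 g' j0') h)) L)) h)) L)).
  { apply lsum_ext. intros g _. rewrite length_flat_map. apply lsum_ext. intros j0 _.
    rewrite length_flat_map. apply lsum_ext. intros g' _. rewrite length_flat_map.
    apply lsum_ext. intros j0' _. unfold f. destruct (_ =? _); reflexivity. }
  rewrite lsum_swap. apply lsum_ext. intros j0 _.
  transitivity (list_sum (map (fun g => list_sum (map (fun j0' => list_sum (map (fun g' =>
    f g j0 g' j0') L)) h)) L)).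
  { apply lsum_ext. intros g _. apply lsum_swap. }
  rewrite lsum_swap. apply lsum_ext. intros j0' _. unfold diff_count. rewrite lsum_swap.
  apply lsum_ext. intros g' _. apply lsum_ext. intros g _. unfold f.
  destruct (Nat.eqb_spec (g + j0) (g' + j0' + k));
    destruct (Z.eqb_spec (Z.of_nat g) (Z.of_nat g' + (Z.of_nat j0' + Z.of_nat k - Z.of_nat j0))); lia.
Qed.

Lemma return_cover (A : R -> Prop) n0 d k y : (forall x, A x -> (0 <= x)%R) ->
  A y -> (exists x, A x /\ Nat.iter k (T rN s) x = y) ->
  ((A y /\ col_length n0 <= y)%R \/ (exists j, In j (seq 0 k) /\ in_level (n0 + d) j y)) \/
  (shifted (n0 + d) k (fun x => A x /\ (col_length n0 <= x)%R) y \/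
   exists j, In j (return_levels n0 d k) /\ in_level (n0 + d) j y).
Proof.
  intros Apos Ay [x [Ax Hxy]].
  destruct (Rle_or_lt (col_length n0) y) as [Ly|Ly]. { left. left. auto. }
  assert (HyN : (Nat.iter k (T rN s) x < col_length (n0 + d))%R).
  { rewrite Hxy. pose proof (col_length_mono n0 d). lra. }
  destruct (iterate_back (n0 + d) x k (Apos x Ax) HyN) as [j [Hj [Hinj Hcase]]].
  rewrite Hxy in Hinj.
  destruct Hcase as [Hjk|[Hjk [Hinx Ey]]]. { left. right. exists j. split; auto. apply in_seq; lia. }
  destruct (Rle_or_lt (col_length n0) x) as [Lx|Lx].
  { right. left. exists j. repeat split; auto. exists x. rewrite <- Hxy, Ey. auto. }
  right. right. exists j. split; auto.
  destruct (low_level_in_copy n0 d j y Hinj Ly) as [p [Hp [j0 [Hj0 Ej]]]].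
  destruct (low_level_in_copy n0 d (j - k) x Hinx Lx) as [p' [Hp' [j0' [Hj0' Ej']]]].
  rewrite Ej. apply in_return_levels with (g' := fst p') (j0' := j0'); auto;
    unfold offsets; try apply in_map; auto. lia.
Qed.

Lemma bottom_levels_small n0 d k delta : (0 < delta)%R -> (INR k * wd n0 / delta < INR d)%R ->
  outer_le (fun y => exists j, In j (seq 0 k) /\ in_level (n0 + d) j y) delta.
Proof.
  intros Hdel Hd. eapply ol_mono. { apply ol_levels. } { intros y Hy; exact Hy. }
  rewrite length_seq. pose proof (width_copies n0 d) as Hw.
  pose proof (copies_ge n0 d) as Hc. apply le_INR in Hc. rewrite plus_INR in Hc. simpl in Hc.
  pose proof (width_pos (n0 + d)). pose proof (pos_INR k).
  assert (INR k * wd n0 <= delta * INR d)%R as Hk.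
  { apply Rmult_lt_compat_r with (r := delta) in Hd; auto. unfold Rdiv in Hd.
    rewrite Rmult_assoc, Rinv_l in Hd by lra. lra. }
  rewrite Hw in Hk. pose proof (pos_INR d).
  assert (0 <= INR k * wd (n0 + d))%R by nra.
  apply Rmult_le_reg_r with (INR d + 1)%R; nra.
Qed.

Lemma return_levels_small n0 d k Z0 (dl : R) :
  (forall z, (Z.of_nat Z0 <= z)%Z -> (diff_density n0 d z <= dl)%R) -> Z0 + hgt n0 <= k ->
  outer_le (fun y => exists j, In j (return_levels n0 d k) /\ in_level (n0 + d) j y)
    (INR (hgt n0 * hgt n0) * wd n0 * dl).
Proof.
  intros HZ0 Hk. eapply ol_mono. { apply ol_levels. } { intros y Hy; exact Hy. }
  rewrite length_return_levels. set (Gd := offsets n0 d). set (h0 := hgt n0) in *.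
  pose proof (lt_0_INR _ (copies_pos n0 d)) as Hc. pose proof (width_pos (n0 + d)).
  assert (Hcount : forall j0 j0', In j0 (seq 0 h0) -> In j0' (seq 0 h0) ->
    (INR (diff_count Gd (Z.of_nat j0' + Z.of_nat k - Z.of_nat j0)%Z) <= dl * INR (copies n0 d))%R).
  { intros j0 j0' H1 H2. apply in_seq in H1, H2.
    pose proof (HZ0 (Z.of_nat j0' + Z.of_nat k - Z.of_nat j0)%Z ltac:(lia)) as Hr.
    unfold diff_density in Hr. fold Gd in Hr.
    apply Rmult_le_reg_r with (/ INR (copies n0 d))%R. { apply Rinv_0_lt_compat; auto. }
    rewrite Rmult_assoc, Rinv_r by lra. lra. }
  eapply Rle_trans.
  - apply Rmult_le_compat_r. { left. apply width_pos. }
    apply INR_lsum_bound. intros j0 Hj0. apply INR_lsum_bound. intros j0' Hj0'. apply Hcount; auto.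
  - rewrite length_seq, (width_copies n0 d), mult_INR. right. ring.
Qed.

(** ** Zero type *)

Lemma tail_beyond_column A M0 delta : outer_le A M0 -> (0 < delta)%R ->
  exists n0, outer_le (fun x => A x /\ (col_length n0 <= x)%R) delta.
Proof.
  intros HA Hdel. destruct (ol_tail A M0 delta HA Hdel) as [R0 HR0].
  destruct (exists_nat_gt R0) as [n0 Hn0]. exists n0.
  eapply ol_mono. { exact HR0. } 2: lra.
  intros y [Ay Hy]. pose proof (col_length_ge n0). split; auto. lra.
Qed.

Lemma zero_type_construction : zero_type rN s.
Proof.
  intros A Apos _ [M0 HA] eps Heps.
  set (delta := (eps / 4)%R). assert (Hdel : (0 < delta)%R) by (unfold delta; lra).
  destruct (tail_beyond_column A M0 delta HA Hdel) as [n0 Htail].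
  destruct (small_factor (INR (hgt n0 * hgt n0) * wd n0) delta) as [dl [Hdl Hret]]; auto.
  { pose proof (pos_INR (hgt n0 * hgt n0)). pose proof (width_pos n0). nra. }
  destruct (difference_density_small n0 dl Hdl) as [Z0 HZ0].
  exists (Z0 + hgt n0). intros k Hk.
  destruct (exists_nat_gt (INR k * wd n0 / delta)) as [d Hd].
  eapply ol_mono.
  - apply ol_union; apply ol_union.
    + exact Htail.
    + exact (bottom_levels_small n0 d k delta Hdel Hd).
    + exact (ol_shifted (n0 + d) k _ _ Htail).
    + exact (ol_mono _ _ _ _ (return_levels_small n0 d k Z0 dl (fun z Hz => HZ0 z d Hz) Hk)
               (fun y Hy => Hy) Hret).
  - intros y [Ay Hy]. exact (return_cover A n0 d k y Apos Ay Hy).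
  - unfold delta. lra.
Qed.

End Construction.

Theorem mainTheorem14 (s : nat -> nat -> nat) :
  (forall n m, H_of rN s hgt n m <-> H_set n m) ->
  (forall n, list_sum (map (fun k => hgt n + s n k)%nat (seq 0 (rN n))) = hgt (S n)) ->
  zero_type rN s.
Proof.
  intros prescribed spacers. exact (zero_type_construction s spacers prescribed).
Qed.
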